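(* Let $m\ge 2$ and let $T$ be any hierarchy of size $m$. Let $H(x)=\sum_{n\ge1}H_nx^n$, where $H_n$ is the number of isomorphism classes of hierarchies of size $n$, and let $H^{(m)}(x)=\sum_{n\ge1}H^{(m)}_nx^n$, where $H^{(m)}_n$ is the number of isomorphism classes of hierarchies of size $n$ that do not contain a subhierarchy isomorphic to $T$. Then the radius of convergence of $H^{(m)}(x)$ is strictly larger than the radius of convergence of $H(x)$.
   Context: A hierarchy is a finite rooted unordered tree in which no vertex has exactly one child; its size is its number of leaves. For a vertex $v$ of a hierarchy, the subhierarchy at $v$ is the hierarchy induced by $v$ and all its descendants (with root $v$); a hierarchy contains $T$ as a subhierarchy if the subhierarchy at some vertex (possibly the root) is isomorphic to $T$ as a rooted tree. *)

From Stdlib Require Import List Permutation Arith Reals ClassicalEpsilon.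
From Coquelicot Require Import Coquelicot.
Import ListNotations.

(* Finite rooted (unordered) trees: a vertex is given by the list of its children;
   the order of the list is irrelevant up to the isomorphism [iso] below. *)
Inductive tree : Type := Node : list tree -> tree.

Inductive iso : tree -> tree -> Prop :=
| iso_node : forall (l l1 l' : list tree),
    Permutation l l1 -> List.Forall2 iso l1 l' -> iso (Node l) (Node l').

(* Number of leaves (the size). *)
Fixpoint leaves (t : tree) : nat :=
  match t with
  | Node l =>
      match l with
      | [] => 1%nat
      | _ => list_sum (map leaves l)
      end
  end.

Fixpoint hierarchy (t : tree) : Prop :=
  match t with
  | Node l =>
      (length l <> 1)%nat /\
      (fix all_h (l : list tree) : Prop :=
         match l with
         | [] => True
         | c :: r => hierarchy c /\ all_h r
         end) l
  end.

Fixpoint subtrees (t : tree) : list tree :=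
  match t with
  | Node l => t :: flat_map subtrees l
  end.

Definition contains (t T : tree) : Prop :=
  exists u, In u (subtrees t) /\ iso u T.

Definition classes_count (P : tree -> Prop) (k : nat) : Prop :=
  exists s : list tree,
    length s = k /\
    List.Forall P s /\
    (forall i j, (i < length s)%nat -> (j < length s)%nat -> i <> j ->
       ~ iso (nth i s (Node [])) (nth j s (Node []))) /\
    (forall t, P t -> exists u, In u s /\ iso t u).

Definition num_classes (P : tree -> Prop) : nat :=
  epsilon (inhabits 0%nat) (fun k => classes_count P k).

Definition hier_gf (Q : tree -> Prop) (n : nat) : R :=
  match n with
  | O => 0%R
  | S _ => INR (num_classes (fun t => hierarchy t /\ leaves t = n /\ Q t))
  end.

(* A multiset of hierarchies is empty, a single
   hierarchy, or the children of a hierarchy with at least two children, so the Euler product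
   prod_t 1/(1 - x^|t|) over the classes t equals 1 + H(x) + (H(x) - x), that is
   exp(H(x) + Q(x)) = 1 + 2 H(x) - x with Q(x) = sum_k h_k (-ln(1 - x^k) - x^k).
   Since exp z >= 2 (1 + z - ln 2), H(x) diverges wherever gap(x) = x + 1 - 2 ln 2 + 2 Q(x) > 0.
   For the hierarchies avoiding T the same product is at least 1 + 2 A(x) - x + x^m, because one
   multiset of weight m (the children of T, or m leaves) is not the multiset of children of an
   avoiding tree; as Q_A <= Q, this keeps the partial sums of A(x) below ln 2 - Q(x) wherever
   gap(x) <= x^m. The a priori bound h_k <= (20/3)^k / 4 makes Q Lipschitz on [0, 31/100], and
   gap(0) < 0 < gap(3/10), so some x0 < x1 satisfy gap(x0) > 0 and gap(x1) <= x1^m. *)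

From Coquelicot Require Import Coquelicot.
From Stdlib Require Import List Permutation Reals ClassicalEpsilon Classical Lia Lra.
Import ListNotations.
Local Open Scope nat_scope.

Lemma Forall2_impl_In {A B} (R R' : A -> B -> Prop) l1 l2 :
  (forall a b, In a l1 -> R a b -> R' a b) -> Forall2 R l1 l2 -> Forall2 R' l1 l2.
Proof.
  intros H HR; induction HR; constructor; auto.
  - apply H; simpl; auto.
  - apply IHHR; intros; apply H; simpl; auto.
Qed.

Lemma Forall2_trans_In {A B C} (R : A -> B -> Prop) (S : B -> C -> Prop) (U : A -> C -> Prop) l1 l2 l3 :
  (forall a b c, In a l1 -> R a b -> S b c -> U a c) ->
  Forall2 R l1 l2 -> Forall2 S l2 l3 -> Forall2 U l1 l3.
Proof.
  intros HU H; revert l3; induction H; intros l3 H2; inversion H2; subst; constructor.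
  - eapply HU; eauto; simpl; auto.
  - apply IHForall2; auto. intros; eapply HU; eauto; simpl; auto.
Qed.

Lemma Forall2_map_ext_In {A B C} (f : A -> C) (g : B -> C) (R : A -> B -> Prop) l1 l2 :
  (forall a b, In a l1 -> R a b -> f a = g b) -> Forall2 R l1 l2 -> map f l1 = map g l2.
Proof.
  intros H HR; induction HR; simpl; f_equal; [apply H; simpl; auto|].
  apply IHHR; intros; apply H; simpl; auto.
Qed.

Lemma list_sum_map_In_le {A} (f : A -> nat) l a : In a l -> f a <= list_sum (map f l).
Proof.
  induction l as [|b l IH]; simpl; [tauto|]. intros [<-|H]; [lia|]. specialize (IH H); lia.
Qed.

Lemma list_sum_map_plus {A} (f g : A -> nat) l :
  list_sum (map (fun x => f x + g x) l) = list_sum (map f l) + list_sum (map g l).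
Proof. induction l; simpl; lia. Qed.

Lemma list_sum_repeat_0 r : list_sum (repeat 0 r) = 0.
Proof. induction r; simpl; auto. Qed.

Lemma list_sum_0_repeat mu : list_sum mu = 0 -> mu = repeat 0 (length mu).
Proof. induction mu; simpl; auto. intros H. f_equal; [lia|]. apply IHmu; lia. Qed.

Definition tree_ind_In (P : tree -> Prop)
    (IH : forall l, (forall a, In a l -> P a) -> P (Node l)) : forall t, P t :=
  fix go t :=
    match t with
    | Node l =>
        IH l ((fix go_list (l : list tree) : forall a, In a l -> P a :=
                 match l with
                 | [] => fun a (H : In a []) => match H with end
                 | b :: l' => fun a H =>
                     match H with
                     | or_introl E => eq_ind b P (go b) a E
                     | or_intror H' => go_list l' a H'
                     end
                 end) l)
    end.

Lemma iso_Node_inv l l' :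
  iso (Node l) (Node l') -> exists l1, Permutation l l1 /\ Forall2 iso l1 l'.
Proof. intros H; inversion H; eauto. Qed.

Lemma iso_refl t : iso t t.
Proof.
  induction t as [l IH] using tree_ind_In. apply (iso_node l l); [apply Permutation_refl|].
  induction l; constructor; [apply IH; simpl; auto|]. apply IHl; intros; apply IH; simpl; auto.
Qed.

Lemma iso_sym t t' : iso t t' -> iso t' t.
Proof.
  revert t'; induction t as [l IH] using tree_ind_In; intros [l'] H.
  destruct (iso_Node_inv _ _ H) as [l1 [Hp Hf]].
  assert (Hf' : Forall2 (fun a b => iso b a) l1 l').
  { eapply Forall2_impl_In; [|exact Hf]. intros a b Ha Hab. apply IH; auto.
    eapply Permutation_in; [apply Permutation_sym|]; eauto. }
  destruct (Permutation_Forall2 (Permutation_sym Hp) Hf') as [l2 [Hp2 Hf2]].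
  econstructor; [exact Hp2|]. exact (Forall2_flip Hf2).
Qed.

Lemma iso_trans t t' t'' : iso t t' -> iso t' t'' -> iso t t''.
Proof.
  revert t' t''; induction t as [l IH] using tree_ind_In; intros [l'] [l''] H1 H2.
  destruct (iso_Node_inv _ _ H1) as [l1 [Hp1 Hf1]].
  destruct (iso_Node_inv _ _ H2) as [l2 [Hp2 Hf2]].
  destruct (Permutation_Forall2 Hp2 (Forall2_flip Hf1)) as [l3 [Hp3 Hf3]].
  econstructor; [exact (perm_trans Hp1 Hp3)|].
  eapply Forall2_trans_In; [|exact (Forall2_flip Hf3)|exact Hf2].
  intros a b c Ha Hab Hbc. eapply IH; eauto.
  eapply Permutation_in; [apply Permutation_sym, (perm_trans Hp1 Hp3)|exact Ha].
Qed.

Definition children (t : tree) : list tree := match t with Node l => l end.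

Lemma leaves_Node l :
  leaves (Node l) = match l with [] => 1 | _ => list_sum (map leaves l) end.
Proof. reflexivity. Qed.

Lemma leaves_pos t : 1 <= leaves t.
Proof.
  induction t as [[|a l] IH] using tree_ind_In; [simpl; lia|]. rewrite leaves_Node.
  pose proof (list_sum_map_In_le leaves (a :: l) a (or_introl eq_refl)).
  pose proof (IH a (or_introl eq_refl)). lia.
Qed.

Lemma leaves_iso t t' : iso t t' -> leaves t = leaves t'.
Proof.
  revert t'; induction t as [l IH] using tree_ind_In; intros [l'] H.
  destruct (iso_Node_inv _ _ H) as [l1 [Hp Hf]].
  assert (E : map leaves l1 = map leaves l').
  { eapply Forall2_map_ext_In; [|exact Hf]. intros a b Ha Hab. apply IH; auto.
    eapply Permutation_in; [apply Permutation_sym|]; eauto. }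
  assert (Es : list_sum (map leaves l) = list_sum (map leaves l')).
  { rewrite <- E. apply Permutation_list_sum, Permutation_map, Hp. }
  pose proof (Forall2_length Hf). pose proof (Permutation_length Hp).
  rewrite !leaves_Node. destruct l, l'; simpl in *; auto; lia.
Qed.

Lemma hierarchy_Node l : hierarchy (Node l) <-> length l <> 1 /\ Forall hierarchy l.
Proof.
  simpl. split; intros [H1 H2]; split; auto; clear H1.
  - induction l; constructor; destruct H2; auto.
  - induction l; auto. inversion H2; subst. split; auto.
    apply IHl; auto.
Qed.

Lemma contains_Node l T :
  contains (Node l) T <-> iso (Node l) T \/ exists a, In a l /\ contains a T.
Proof.
  unfold contains; simpl. split.
  - intros [u [[<-|Hu] Hi]]; [auto|]. right.
    apply in_flat_map in Hu as [a [Ha Hu]]. eauto.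
  - intros [H|[a [Ha [u [Hu Hi]]]]]; [eauto|]. exists u; split; auto.
    right. apply in_flat_map; eauto.
Qed.

Lemma leaves_child_le a l : In a l -> leaves a <= leaves (Node l).
Proof.
  intros H. rewrite leaves_Node. destruct l; [contradiction|]. apply list_sum_map_In_le, H.
Qed.

Lemma leaves_child_lt a l : In a l -> 2 <= length l -> leaves a < leaves (Node l).
Proof.
  intros H Hl. rewrite leaves_Node. destruct l as [|b l]; [contradiction|].
  apply in_split in H as [l1 [l2 E]]. rewrite E, map_app, list_sum_app. simpl.
  destruct l1 as [|c l1]; destruct l2 as [|d l2]; simpl in *.
  - inversion E; subst. simpl in Hl; lia.
  - pose proof (leaves_pos d); lia.
  - pose proof (leaves_pos c); lia.
  - pose proof (leaves_pos c); lia.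
Qed.

Lemma hierarchy_child a l : hierarchy (Node l) -> In a l -> hierarchy a.
Proof. intros [_ H]%hierarchy_Node Ha. rewrite Forall_forall in H; auto. Qed.

Lemma hierarchy_arity l : hierarchy (Node l) -> l <> [] -> 2 <= length l.
Proof.
  intros [H _]%hierarchy_Node Hne. destruct l as [|a [|b l]]; simpl in *; lia || congruence.
Qed.

Lemma hierarchy_child_lt a l : hierarchy (Node l) -> In a l -> leaves a < leaves (Node l).
Proof.
  intros Hh Ha. apply leaves_child_lt, hierarchy_arity; auto. destruct l; [contradiction|discriminate].
Qed.

Lemma hierarchy_leaf t : hierarchy t -> leaves t = 1 -> t = Node [].
Proof.
  intros Hh Hl. destruct t as [[|a l]]; auto. exfalso.
  pose proof (hierarchy_child_lt a (a :: l) Hh (or_introl eq_refl)). pose proof (leaves_pos a). lia.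
Qed.

Lemma leaves_subtree_le t u : In u (subtrees t) -> leaves u <= leaves t.
Proof.
  induction t as [l IH] using tree_ind_In; cbn [subtrees In]; intros [<-|H]; [lia|].
  apply in_flat_map in H as [a [Ha Hu]].
  pose proof (IH a Ha Hu). pose proof (leaves_child_le a l Ha). lia.
Qed.

Lemma length_le_leaves l : length l <= leaves (Node l).
Proof.
  rewrite leaves_Node. destruct l as [|b l]; [simpl; lia|].
  generalize (b :: l). induction l0 as [|a l0 IH]; simpl; auto. pose proof (leaves_pos a); lia.
Qed.

Lemma leaves_repeat_leaf r : list_sum (map leaves (repeat (Node []) r)) = r.
Proof. induction r; simpl; auto. Qed.

Fixpoint words {A} (k : nat) (L : list A) : list (list A) :=
  match k with
  | 0 => [[]]
  | S k => flat_map (fun a => map (cons a) (words k L)) L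
  end.

Fixpoint bounded_trees (d w : nat) : list tree :=
  match d with
  | 0 => [Node []]
  | S d => map Node (flat_map (fun k => words k (bounded_trees d w)) (seq 0 (S w)))
  end.

Fixpoint bounded_tree (d w : nat) (t : tree) : Prop :=
  match d, t with
  | 0, Node l => l = []
  | S d, Node l => length l <= w /\ Forall (bounded_tree d w) l
  end.

Lemma In_words {A} (L : list A) l : incl l L -> In l (words (length l) L).
Proof.
  induction l as [|a l IH]; simpl; auto. intros H. apply in_flat_map.
  exists a; split; [apply H; simpl; auto|]. apply in_map, IH. intros b Hb; apply H; simpl; auto.
Qed.

Lemma In_bounded_trees d w t : bounded_tree d w t -> In t (bounded_trees d w).
Proof.
  revert t; induction d; intros [l] H; simpl in H.
  - subst; simpl; auto.
  - destruct H as [Hl Hf]. apply in_map, in_flat_map.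
    exists (length l); split; [apply in_seq; lia|]. apply In_words.
    intros a Ha. apply IHd. rewrite Forall_forall in Hf; auto.
Qed.

Lemma hierarchy_bounded d w t : hierarchy t -> leaves t <= S d -> leaves t <= w -> bounded_tree d w t.
Proof.
  revert t; induction d; intros [l] Hh H1 H2; simpl.
  - destruct l as [|a l]; auto. exfalso.
    pose proof (hierarchy_child_lt a _ Hh (or_introl eq_refl)). pose proof (leaves_pos a). lia.
  - pose proof (length_le_leaves l). split; [lia|]. apply Forall_forall; intros a Ha.
    pose proof (hierarchy_child_lt a _ Hh Ha).
    apply IHd; [eapply hierarchy_child|..]; eauto; lia.
Qed.

Definition noniso_list : list tree -> Prop := ForallOrdPairs (fun a b => ~ iso a b).

Lemma noniso_list_nth s d :
  noniso_list s <->
  forall i j, i < length s -> j < length s -> i <> j -> ~ iso (nth i s d) (nth j s d).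
Proof.
  induction s as [|a s IH]; simpl.
  - split; [intros; lia|constructor].
  - split.
    + intros Hs. inversion Hs as [|? ? Ha Hs']; subst. rewrite Forall_forall in Ha.
      intros [|i] [|j] Hi Hj Hij; try lia.
      * apply Ha, nth_In; lia.
      * intros Hiso. apply (Ha (nth i s d)); [apply nth_In; lia|]. apply iso_sym; auto.
      * apply IH; auto; lia.
    + intros H. constructor.
      * apply Forall_forall. intros b Hb. apply (In_nth _ _ d) in Hb as [j [Hj <-]].
        apply (H 0 (S j)); lia.
      * apply IH. intros i j Hi Hj Hij. apply (H (S i) (S j)); lia.
Qed.

Lemma noniso_list_app s1 s2 :
  noniso_list s1 -> noniso_list s2 -> (forall a b, In a s1 -> In b s2 -> ~ iso a b) ->
  noniso_list (s1 ++ s2).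
Proof.
  induction 1 as [|a s1 Ha Hs1 IH]; simpl; auto. intros Hs2 Hx. constructor.
  - apply Forall_app; split; [exact Ha|]. apply Forall_forall; intros b Hb; apply Hx; simpl; auto.
  - apply IH; auto.
Qed.

Lemma noniso_list_eq s x y : noniso_list s -> In x s -> In y s -> iso x y -> x = y.
Proof.
  intros Hs Hx Hy Hi. destruct (ForallOrdPairs_In Hs x y Hx Hy) as [E|[H|H]]; auto; exfalso.
  - contradiction.
  - apply H, iso_sym, Hi.
Qed.

Lemma noniso_list_NoDup s : noniso_list s -> NoDup s.
Proof.
  intros Hs. apply NoDup_iff_ForallOrdPairs. induction Hs as [|a s Ha Hs IH]; constructor; auto.
  eapply Forall_impl; [|exact Ha]. intros b Hab <-. apply Hab, iso_refl.
Qed.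

Lemma noniso_reps_exist (P : tree -> Prop) (L : list tree) :
  exists s, Forall P s /\ noniso_list s /\
    forall t, In t L -> P t -> exists u, In u s /\ iso t u.
Proof.
  induction L as [|a L IH].
  - exists []; repeat split; [constructor|constructor|]. intros t [].
  - destruct IH as [s [Hf [Hp Hc]]].
    destruct (classic (exists u, In u s /\ iso a u)) as [Hold|Hnew].
    + exists s; repeat split; auto. intros t [<-|Ht] Pt; auto.
    + destruct (classic (P a)) as [Pa|nPa].
      * exists (a :: s); repeat split; [constructor; auto| |].
        -- constructor; auto. apply Forall_forall; intros u Hu Hau. apply Hnew; eauto.
        -- intros t [<-|Ht] Pt; [exists a; split; [left|apply iso_refl]; auto|].
           destruct (Hc t Ht Pt) as [u [? ?]]; exists u; split; [right|]; auto.
      * exists s; repeat split; auto. intros t [<-|Ht] Pt; [contradiction|auto].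
Qed.

Definition hier_of_size (Q : tree -> Prop) (n : nat) (t : tree) : Prop :=
  hierarchy t /\ leaves t = n /\ Q t.

Lemma classes_count_exists Q n : exists k, classes_count (hier_of_size Q n) k.
Proof.
  destruct (noniso_reps_exist (hier_of_size Q n) (bounded_trees n n)) as [s [Hf [Hp Hc]]].
  exists (length s), s. repeat split; auto.
  - intros i j Hi Hj Hij. apply noniso_list_nth; auto.
  - intros t Pt. apply Hc; auto. apply In_bounded_trees.
    destruct Pt as [Hh [Hl _]]. apply hierarchy_bounded; auto; lia.
Qed.

Lemma reps_spec Q n :
  exists s, INR (length s) = hier_gf Q n /\ Forall (hier_of_size Q n) s /\ noniso_list s /\
    forall t, hier_of_size Q n t -> exists u, In u s /\ iso t u.
Proof.
  pose proof (epsilon_spec (inhabits 0) _ (classes_count_exists Q n)) as H.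
  fold (num_classes (hier_of_size Q n)) in H. destruct H as [s [H1 [H2 [H3 H4]]]].
  destruct n as [|n].
  - exists []; repeat split; [constructor|constructor|]. intros t [_ [Ht _]].
    pose proof (leaves_pos t); lia.
  - exists s; repeat split; auto; [rewrite H1; reflexivity|]. eapply noniso_list_nth; eauto.
Qed.

Definition reps (Q : tree -> Prop) (n : nat) : list tree :=
  proj1_sig (constructive_indefinite_description _ (reps_spec Q n)).

Lemma hier_gf_reps Q n : hier_gf Q n = INR (length (reps Q n)).
Proof.
  unfold reps; destruct (constructive_indefinite_description _ _) as [s H]; simpl; symmetry; tauto.
Qed.

Lemma In_reps Q n t : In t (reps Q n) -> hier_of_size Q n t.
Proof.
  unfold reps; destruct (constructive_indefinite_description _ _) as [s Hs]; simpl.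
  destruct Hs as [_ [H _]]. rewrite Forall_forall in H; auto.
Qed.

Lemma reps_noniso Q n : noniso_list (reps Q n).
Proof. unfold reps; destruct (constructive_indefinite_description _ _) as [s H]; simpl; tauto. Qed.

Lemma reps_cover Q n t : hier_of_size Q n t -> exists u, In u (reps Q n) /\ iso t u.
Proof.
  unfold reps; destruct (constructive_indefinite_description _ _) as [s Hs]; simpl.
  destruct Hs as [_ [_ [_ H]]]; auto.
Qed.

Definition reps_in (Q : tree -> Prop) (ks : list nat) : list tree := flat_map (reps Q) ks.

Lemma In_reps_in Q ks c : In c (reps_in Q ks) -> exists k, In k ks /\ hier_of_size Q k c.
Proof.
  intros H. apply in_flat_map in H as [k [Hk Hc]]. exists k; split; auto. apply In_reps, Hc.
Qed.

Lemma reps_in_cover Q ks a k :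
  In k ks -> hier_of_size Q k a -> exists c, In c (reps_in Q ks) /\ iso a c.
Proof.
  intros Hk Ha. destruct (reps_cover Q k a Ha) as [u [Hu Hi]].
  exists u; split; auto. apply in_flat_map; eauto.
Qed.

Lemma reps_in_noniso Q ks : NoDup ks -> noniso_list (reps_in Q ks).
Proof.
  induction 1 as [|k ks Hk Hks IH]; [constructor|]. apply noniso_list_app; auto; [apply reps_noniso|].
  intros a b Ha Hb Hi. apply In_reps in Ha as [_ [La _]].
  apply In_reps_in in Hb as [k' [Hk' [_ [Lb _]]]].
  apply leaves_iso in Hi. subst. rewrite <- Hi in Hk'. contradiction.
Qed.

(** * Multiplicity vectors *)

Definition isob (a c : tree) : bool := if excluded_middle_informative (iso a c) then true else false.

Lemma isob_true a c : isob a c = true <-> iso a c.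
Proof. unfold isob; destruct (excluded_middle_informative _); split; auto; discriminate. Qed.

Lemma isob_false a c : isob a c = false <-> ~ iso a c.
Proof.
  unfold isob; destruct (excluded_middle_informative _); split; auto; try discriminate; tauto.
Qed.

Lemma isob_iso_l a b c : iso a b -> isob a c = isob b c.
Proof.
  intros H. destruct (isob b c) eqn:E.
  - apply isob_true in E. apply isob_true. eapply iso_trans; eauto.
  - apply isob_false in E. apply isob_false. intros Hac. apply E. eapply iso_trans; [apply iso_sym|]; eauto.
Qed.

Definition iso_count (c : tree) (l : list tree) : nat := length (filter (fun a => isob a c) l).

(* A multiset l of trees up to isomorphism is encoded by its vector of multiplicities over a
   list L of pairwise non-isomorphic representatives. *)
Definition mult_vec (L l : list tree) : list nat := map (fun c => iso_count c l) L.

Definition covered (L l : list tree) : Prop := forall a, In a l -> exists c, In c L /\ iso a c.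

Lemma iso_count_cons c a l : iso_count c (a :: l) = (if isob a c then 1 else 0) + iso_count c l.
Proof. unfold iso_count; simpl; destruct (isob a c); reflexivity. Qed.

Lemma iso_count_app c l1 l2 : iso_count c (l1 ++ l2) = iso_count c l1 + iso_count c l2.
Proof. unfold iso_count. rewrite filter_app, length_app; auto. Qed.

Lemma iso_count_perm c l l' : Permutation l l' -> iso_count c l = iso_count c l'.
Proof. induction 1; rewrite ?iso_count_cons; lia. Qed.

Lemma iso_count_Forall2 c l1 l2 : Forall2 iso l1 l2 -> iso_count c l1 = iso_count c l2.
Proof. induction 1; auto. rewrite !iso_count_cons, (isob_iso_l x y c H). lia. Qed.

Lemma iso_count_pos c l : 0 < iso_count c l <-> exists b, In b l /\ iso b c.
Proof.
  unfold iso_count. split.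
  - intros H. destruct (filter _ l) as [|b f] eqn:E; simpl in H; [lia|].
    assert (Hb : In b (filter (fun a => isob a c) l)) by (rewrite E; left; auto).
    apply filter_In in Hb as [Hb Hi]. apply isob_true in Hi. eauto.
  - intros [b [Hb Hi]]. destruct (filter _ l) as [|b' f] eqn:E; simpl; [|lia].
    assert (In b (filter (fun a => isob a c) l)) as Hf
      by (apply filter_In; split; auto; apply isob_true; auto).
    rewrite E in Hf; contradiction.
Qed.

Lemma mult_vec_iso L l l' : iso (Node l) (Node l') -> mult_vec L l = mult_vec L l'.
Proof.
  intros H. destruct (iso_Node_inv _ _ H) as [l1 [Hp Hf]]. apply map_ext; intros c.
  rewrite (iso_count_perm c _ _ Hp). apply iso_count_Forall2, Hf.
Qed.

Lemma covered_cons L a l : covered L (a :: l) <-> (exists c, In c L /\ iso a c) /\ covered L l.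
Proof.
  split.
  - intros H. split; [apply H; left; auto|intros b Hb; apply H; right; auto].
  - intros [Ha Hl] b [<-|Hb]; auto.
Qed.

Lemma iso_children_of_iso_counts L l l' :
  covered L l -> covered L l' -> (forall c, In c L -> iso_count c l = iso_count c l') ->
  exists l1, Permutation l l1 /\ Forall2 iso l1 l'.
Proof.
  revert l'; induction l as [|a l IH]; intros l' H1 H2 Hc.
  - destruct l' as [|b l']; [exists []; split; constructor|].
    destruct (H2 b (or_introl eq_refl)) as [c [HcL Hbc]].
    assert (0 < iso_count c (b :: l')) as Hpos by (apply iso_count_pos; exists b; simpl; auto).
    rewrite <- Hc in Hpos; auto. apply iso_count_pos in Hpos as [? [[] _]].
  - apply covered_cons in H1 as [[c [HcL Hac]] H1].
    assert (0 < iso_count c l') as Hpos.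
    { rewrite <- Hc by auto. apply iso_count_pos. exists a; simpl; auto. }
    apply iso_count_pos in Hpos as [b [Hb Hbc]].
    assert (Hab : iso a b) by (eapply iso_trans; [exact Hac|apply iso_sym; auto]).
    apply in_split in Hb as [la [lb ->]].
    destruct (IH (la ++ lb)) as [l1 [Hp Hf]]; auto.
    + intros x Hx; apply H2. apply in_app_or in Hx; apply in_or_app; simpl; tauto.
    + intros c' Hc'. specialize (Hc c' Hc').
      rewrite iso_count_cons, !iso_count_app, iso_count_cons, (isob_iso_l a b c' Hab) in Hc.
      rewrite iso_count_app. lia.
    + apply Forall2_app_inv_r in Hf as [l1a [l1b [Ha [Hb ->]]]].
      exists (l1a ++ a :: l1b). split.
      * eapply perm_trans; [apply perm_skip, Hp|]. apply Permutation_middle.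
      * apply Forall2_app; auto.
Qed.

Lemma iso_of_mult_vec L l l' :
  covered L l -> covered L l' -> mult_vec L l = mult_vec L l' -> iso (Node l) (Node l').
Proof.
  intros H1 H2 Hv. destruct (iso_children_of_iso_counts L l l') as [l1 [? ?]]; auto.
  - exact (ext_in_map Hv).
  - econstructor; eauto.
Qed.

Section IsoInvariantSums.

Variable f : tree -> nat.
Hypothesis f_iso : forall x y, iso x y -> f x = f y.

Lemma sum_isob_noniso L a :
  noniso_list L -> (exists c, In c L /\ iso a c) ->
  list_sum (map (fun c => if isob a c then f c else 0) L) = f a.
Proof.
  induction 1 as [|c0 L Hn HL IH]; intros [c [Hc Hi]]; [contradiction|]. simpl.
  destruct (isob a c0) eqn:E.
  - apply isob_true in E. rewrite (f_iso _ _ E).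
    enough (list_sum (map (fun c => if isob a c then f c else 0) L) = 0) by lia.
    rewrite Forall_forall in Hn.
    assert (Hz : forall c1, In c1 L -> isob a c1 = false).
    { intros c1 H1. apply isob_false. intros Hi1.
      apply (Hn c1 H1). eapply iso_trans; [apply iso_sym|]; eauto. }
    clear - Hz. induction L as [|c1 L IHL]; simpl; auto.
    rewrite Hz by (left; auto). apply IHL. intros; apply Hz; right; auto.
  - apply isob_false in E. destruct Hc as [<-|Hc]; [contradiction|]. rewrite IH; eauto.
Qed.

Lemma sum_iso_counts L l :
  noniso_list L -> covered L l ->
  list_sum (map (fun c => iso_count c l * f c) L) = list_sum (map f l).
Proof.
  intros HL. induction l as [|a l IH]; intros Hc.
  - clear HL Hc. induction L; simpl; auto.
  - apply covered_cons in Hc as [Ha Hc]. simpl. rewrite <- IH, <- (sum_isob_noniso L a HL Ha) by auto.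
    rewrite <- list_sum_map_plus. f_equal. apply map_ext. intros c.
    rewrite iso_count_cons. destruct (isob a c); lia.
Qed.

End IsoInvariantSums.

Fixpoint weight (ws mu : list nat) : nat :=
  match ws, mu with
  | w :: ws', j :: mu' => j * w + weight ws' mu'
  | _, _ => 0
  end.

Lemma weight_mult_vec L l :
  noniso_list L -> covered L l -> weight (map leaves L) (mult_vec L l) = list_sum (map leaves l).
Proof.
  intros HL Hc. rewrite <- (sum_iso_counts leaves leaves_iso L l HL Hc).
  unfold mult_vec. clear. induction L; simpl; auto.
Qed.

Lemma list_sum_mult_vec L l : noniso_list L -> covered L l -> list_sum (mult_vec L l) = length l.
Proof.
  intros HL Hc. transitivity (list_sum (map (fun _ => 1) l)).
  - rewrite <- (sum_iso_counts (fun _ => 1) (fun _ _ _ => eq_refl) L l HL Hc).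
    unfold mult_vec. f_equal. apply map_ext; intros; lia.
  - clear. induction l; simpl; auto.
Qed.

Lemma weight_zero ws r : weight ws (repeat 0 r) = 0.
Proof. revert r; induction ws; intros [|r]; simpl; auto. Qed.

Lemma list_sum_le_weight ws mu :
  (forall w, In w ws -> (1 <= w)) -> length mu = length ws -> (list_sum mu <= weight ws mu).
Proof.
  revert mu; induction ws as [|w ws IH]; intros [|j mu] Hw Hl; simpl in *; try lia.
  specialize (IH mu (fun v Hv => Hw v (or_intror Hv)) ltac:(lia)).
  specialize (Hw w (or_introl eq_refl)). nia.
Qed.

Fixpoint of_mults (L : list tree) (mu : list nat) : list tree :=
  match L, mu with
  | c :: L', j :: mu' => repeat c j ++ of_mults L' mu'
  | _, _ => []
  end.

Lemma In_of_mults L mu a : In a (of_mults L mu) -> In a L.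
Proof.
  revert mu; induction L; intros [|j mu]; simpl; try tauto.
  intros H; apply in_app_or in H as [H|H]; [apply repeat_spec in H; auto|right; eauto].
Qed.

Lemma iso_count_repeat c a j : iso_count c (repeat a j) = if isob a c then j else 0.
Proof.
  induction j; simpl; [destruct (isob a c); auto|]. rewrite iso_count_cons, IHj. destruct (isob a c); lia.
Qed.

Lemma mult_vec_of_mults L mu :
  noniso_list L -> length mu = length L -> mult_vec L (of_mults L mu) = mu.
Proof.
  intros HL; revert mu; induction HL as [|c L Hn HL IH]; intros [|j mu] Hl; simpl in *; try lia; auto.
  rewrite Forall_forall in Hn. f_equal.
  - rewrite iso_count_app, iso_count_repeat.
    replace (isob c c) with true by (symmetry; apply isob_true, iso_refl).
    enough (iso_count c (of_mults L mu) = 0) by lia.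
    destruct (iso_count c (of_mults L mu)) eqn:Z; auto. exfalso.
    destruct (proj1 (iso_count_pos c (of_mults L mu)) ltac:(lia)) as [b [Hb Hbc]].
    apply (Hn b (In_of_mults _ _ _ Hb)), iso_sym, Hbc.
  - rewrite <- (IH mu ltac:(lia)) at 2. apply map_ext_in. intros c' Hc'.
    rewrite iso_count_app, iso_count_repeat. destruct (isob c c') eqn:E; auto.
    apply isob_true in E. exfalso; apply (Hn c' Hc' E).
Qed.

Lemma leaves_of_mults L mu : list_sum (map leaves (of_mults L mu)) = weight (map leaves L) mu.
Proof.
  revert mu; induction L; intros [|j mu]; simpl; auto.
  rewrite map_app, list_sum_app, IHL. f_equal. induction j; simpl; lia.
Qed.

Lemma length_of_mults L mu : length mu = length L -> length (of_mults L mu) = list_sum mu.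
Proof.
  revert mu; induction L; intros [|j mu]; simpl; intros; try lia.
  rewrite length_app, repeat_length, IHL; lia.
Qed.

Fixpoint box (r J : nat) : list (list nat) :=
  match r with
  | 0 => [[]]
  | S r => flat_map (fun j => map (cons j) (box r J)) (seq 0 (S J))
  end.

Lemma In_box r J mu : length mu = r -> (forall j, In j mu -> j <= J) -> In mu (box r J).
Proof.
  revert mu; induction r; intros [|j mu] Hl Hj; simpl in Hl; try lia; [simpl; auto|].
  apply in_flat_map. exists j; split; [apply in_seq; specialize (Hj j (or_introl eq_refl)); lia|].
  apply in_map, IHr; [lia|intros; apply Hj; right; auto].
Qed.

Lemma length_In_box r J mu : In mu (box r J) -> length mu = r.
Proof.
  revert mu; induction r; intros mu H; cbn [box] in H; [destruct H as [<-|[]]; auto|].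
  apply in_flat_map in H as [j [_ H]]. apply in_map_iff in H as [nu [<- H]]. simpl; f_equal; auto.
Qed.

Lemma box_NoDup r J : NoDup (box r J).
Proof.
  induction r; [repeat constructor; auto|]. cbn [box].
  generalize (seq_NoDup (S J) 0). generalize (seq 0 (S J)). intros s Hs.
  induction Hs as [|j s Hj Hs IHs]; simpl; [constructor|]. apply NoDup_app; auto.
  - apply FinFun.Injective_map_NoDup; auto. intros x y E; injection E; auto.
  - intros x Hx Hx'. apply in_map_iff in Hx as [y [<- _]].
    apply in_flat_map in Hx' as [j' [Hj' Hx']]. apply in_map_iff in Hx' as [z [E _]].
    injection E; intros; subst. contradiction.
Qed.

Fixpoint unit_vecs (r : nat) : list (list nat) :=
  match r with
  | 0 => []
  | S r => (1 :: repeat 0 r) :: map (cons 0) (unit_vecs r)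
  end.

Lemma In_unit_vecs r mu : In mu (unit_vecs r) -> length mu = r /\ list_sum mu = 1.
Proof.
  revert mu; induction r; simpl; intros mu Hmu; [contradiction|]. destruct Hmu as [<-|H].
  - simpl. rewrite repeat_length, list_sum_repeat_0. auto.
  - apply in_map_iff in H as [nu [<- Hnu]]. destruct (IHr nu Hnu). simpl; auto.
Qed.

Lemma unit_vecs_NoDup r : NoDup (unit_vecs r).
Proof.
  induction r; simpl; constructor; auto.
  - intros H. apply in_map_iff in H as [x [E _]]. discriminate.
  - apply FinFun.Injective_map_NoDup; auto. intros x y E; injection E; auto.
Qed.

Definition small_vecs (r : nat) : list (list nat) := repeat 0 r :: unit_vecs r.

Lemma In_small_vecs r mu : In mu (small_vecs r) -> length mu = r /\ list_sum mu <= 1.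
Proof.
  intros [<-|Hmu]; [rewrite list_sum_repeat_0, repeat_length; auto|].
  apply In_unit_vecs in Hmu as [-> ->]; auto.
Qed.

Lemma small_vecs_NoDup r : NoDup (small_vecs r).
Proof.
  constructor; [|apply unit_vecs_NoDup]. intros Hin.
  apply In_unit_vecs in Hin as [_ Hs]. rewrite list_sum_repeat_0 in Hs; lia.
Qed.

Local Open Scope R_scope.

Definition sumR {A} (f : A -> R) (l : list A) : R := fold_right (fun a acc => f a + acc) 0 l.

Definition prodR {A} (f : A -> R) (l : list A) : R := fold_right (fun a acc => f a * acc) 1 l.

Arguments sumR {A} f l : simpl never.

Arguments prodR {A} f l : simpl never.

Lemma sumR_nil {A} (f : A -> R) : sumR f [] = 0.
Proof. reflexivity. Qed.

Lemma sumR_cons {A} (f : A -> R) a l : sumR f (a :: l) = f a + sumR f l.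
Proof. reflexivity. Qed.

Lemma sumR_app {A} (f : A -> R) l1 l2 : sumR f (l1 ++ l2) = sumR f l1 + sumR f l2.
Proof. induction l1; simpl; rewrite ?sumR_nil, ?sumR_cons, ?IHl1; lra. Qed.

Lemma sumR_map {A B} (f : B -> R) (g : A -> B) l : sumR f (map g l) = sumR (fun a => f (g a)) l.
Proof. induction l; simpl; rewrite ?sumR_cons, ?IHl; auto. Qed.

Lemma sumR_flat_map {A B} (f : B -> R) (g : A -> list B) l :
  sumR f (flat_map g l) = sumR (fun a => sumR f (g a)) l.
Proof. induction l; simpl; auto. rewrite sumR_app, sumR_cons, IHl; auto. Qed.

Lemma sumR_le {A} (f g : A -> R) l : (forall a, In a l -> f a <= g a) -> sumR f l <= sumR g l.
Proof.
  induction l as [|a l IH]; intros H; rewrite ?sumR_nil, ?sumR_cons; [lra|].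
  pose proof (H a (or_introl eq_refl)). pose proof (IH (fun x Hx => H x (or_intror Hx))). lra.
Qed.

Lemma sumR_const {A} c (l : list A) : sumR (fun _ => c) l = INR (length l) * c.
Proof.
  induction l; rewrite ?sumR_nil, ?sumR_cons, ?IHl; simpl length; rewrite ?S_INR; simpl; lra.
Qed.

Lemma sumR_nonneg {A} (f : A -> R) l : (forall a, In a l -> 0 <= f a) -> 0 <= sumR f l.
Proof.
  intros H. apply Rle_trans with (sumR (fun _ => 0) l); [|apply sumR_le, H].
  rewrite sumR_const; lra.
Qed.

Lemma sumR_ext {A} (f g : A -> R) l : (forall a, In a l -> f a = g a) -> sumR f l = sumR g l.
Proof. intros H; apply Rle_antisym; apply sumR_le; intros a Ha; rewrite H; auto; lra. Qed.

Lemma sumR_plus {A} (f g : A -> R) l : sumR (fun a => f a + g a) l = sumR f l + sumR g l.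
Proof. induction l; rewrite ?sumR_nil, ?sumR_cons, ?IHl; lra. Qed.

Lemma sumR_scal {A} (f : A -> R) c l : sumR (fun a => c * f a) l = c * sumR f l.
Proof. induction l; rewrite ?sumR_nil, ?sumR_cons, ?IHl; lra. Qed.

Lemma sumR_perm {A} (f : A -> R) l l' : Permutation l l' -> sumR f l = sumR f l'.
Proof. induction 1; auto; rewrite ?sumR_cons; lra. Qed.

Lemma sumR_In_le {A} (f : A -> R) l a : (forall b, In b l -> 0 <= f b) -> In a l -> f a <= sumR f l.
Proof.
  intros H Ha. apply in_split in Ha as [l1 [l2 ->]].
  rewrite sumR_app, sumR_cons.
  assert (0 <= sumR f l1) by (apply sumR_nonneg; intros; apply H, in_or_app; auto).
  assert (0 <= sumR f l2) by (apply sumR_nonneg; intros; apply H, in_or_app; simpl; auto).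
  lra.
Qed.

Lemma sumR_incl {A} (f : A -> R) l L :
  (forall a, 0 <= f a) -> NoDup l -> incl l L -> sumR f l <= sumR f L.
Proof.
  intros Hf; revert L; induction l as [|a l IH]; intros L Hnd Hi.
  - rewrite sumR_nil. apply sumR_nonneg; auto.
  - assert (In a L) as Ha by (apply Hi; left; auto). apply in_split in Ha as [L1 [L2 ->]].
    rewrite (sumR_perm f (L1 ++ a :: L2) (a :: L1 ++ L2)) by (apply Permutation_sym, Permutation_middle).
    rewrite !sumR_cons. inversion Hnd; subst. apply Rplus_le_compat_l, IH; auto.
    intros y Hy. assert (In y (L1 ++ a :: L2)) as Hy' by (apply Hi; right; auto).
    apply in_app_or in Hy'; apply in_or_app. destruct Hy' as [?|[<-|?]]; auto; contradiction.
Qed.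

Lemma sumR_filter {A} (f : A -> R) (p : A -> bool) l :
  sumR f l = sumR f (filter p l) + sumR f (filter (fun a => negb (p a)) l).
Proof.
  induction l; simpl; rewrite ?sumR_nil; [lra|]. destruct (p a); simpl; rewrite !sumR_cons, IHl; lra.
Qed.

Lemma sumR_seq_0 (f : nat -> R) N : f 0%nat = 0 -> sumR f (seq 0 (S N)) = sumR f (seq 1 N).
Proof. intros H0. change (seq 0 (S N)) with (0%nat :: seq 1 N). rewrite sumR_cons, H0. lra. Qed.

Lemma prodR_nil {A} (f : A -> R) : prodR f [] = 1.
Proof. reflexivity. Qed.

Lemma prodR_cons {A} (f : A -> R) a l : prodR f (a :: l) = f a * prodR f l.
Proof. reflexivity. Qed.

Lemma prodR_map {A B} (f : B -> R) (g : A -> B) l : prodR f (map g l) = prodR (fun a => f (g a)) l.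
Proof. induction l; simpl; rewrite ?prodR_cons, ?IHl; auto. Qed.

Lemma prodR_nonneg {A} (f : A -> R) l : (forall a, In a l -> 0 <= f a) -> 0 <= prodR f l.
Proof.
  induction l; intros H; rewrite ?prodR_nil, ?prodR_cons; [lra|].
  apply Rmult_le_pos; [apply H; left; auto|apply IHl; intros; apply H; right; auto].
Qed.

Lemma prodR_le {A} (f g : A -> R) l : (forall a, In a l -> 0 <= f a <= g a) -> prodR f l <= prodR g l.
Proof.
  induction l; intros H; rewrite ?prodR_nil, ?prodR_cons; [lra|].
  destruct (H a (or_introl eq_refl)). apply Rmult_le_compat; auto.
  - apply prodR_nonneg; intros; apply H; right; auto.
  - apply IHl; intros; apply H; right; auto.
Qed.

Lemma prodR_pos {A} (f : A -> R) l : (forall a, In a l -> 0 < f a) -> 0 < prodR f l.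
Proof.
  induction l; intros H; rewrite ?prodR_nil, ?prodR_cons; [lra|].
  apply Rmult_lt_0_compat; [apply H; left; auto|apply IHl; intros; apply H; right; auto].
Qed.

Lemma prodR_inv {A} (f : A -> R) l :
  (forall a, In a l -> 0 < f a) -> prodR (fun a => 1 / f a) l = 1 / prodR f l.
Proof.
  induction l; intros H; rewrite ?prodR_nil, ?prodR_cons; [lra|].
  assert (Hl : forall b, In b l -> 0 < f b) by (intros; apply H; right; auto).
  pose proof (H a (or_introl eq_refl)). pose proof (prodR_pos f l Hl).
  rewrite IHl by exact Hl. field. lra.
Qed.

Lemma pow_lt_1 x w : 0 <= x < 1 -> (1 <= w)%nat -> 0 <= x ^ w < 1.
Proof. intros Hx Hw. split; [apply pow_le; lra|apply pow_lt_1_compat; auto; lia]. Qed.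

Lemma pow_le_self x k : 0 <= x <= 1 -> (1 <= k)%nat -> x ^ k <= x.
Proof.
  intros Hx Hk. destruct k as [|k]; [lia|]. simpl.
  assert (x ^ k <= 1) by (rewrite <- (pow1 k); apply pow_incr; lra).
  pose proof (pow_le x k (proj1 Hx)). nra.
Qed.

Lemma geom_sum u J : u <> 1 -> sumR (fun j => u ^ j) (seq 0 (S J)) = (1 - u ^ S J) / (1 - u).
Proof.
  intros Hu. induction J.
  - simpl. rewrite sumR_cons, sumR_nil. field. lra.
  - rewrite seq_S, sumR_app, IHJ, sumR_cons, sumR_nil. simpl. field. lra.
Qed.

Lemma geom_sum_le u J : 0 <= u < 1 -> sumR (fun j => u ^ j) (seq 0 (S J)) <= 1 / (1 - u).
Proof.
  intros Hu. rewrite geom_sum by lra. unfold Rdiv. apply Rmult_le_compat_r.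
  - apply Rlt_le, Rinv_0_lt_compat; lra.
  - pose proof (pow_le u (S J) (proj1 Hu)); lra.
Qed.

Lemma prodR_one_minus_ge (l : list R) :
  (forall a, In a l -> 0 <= a <= 1) -> 1 - sumR (fun a => a) l <= prodR (fun a => 1 - a) l.
Proof.
  induction l; intros H; [rewrite sumR_nil, prodR_nil; lra|]. rewrite sumR_cons, prodR_cons.
  destruct (H a (or_introl eq_refl)). specialize (IHl (fun b Hb => H b (or_intror Hb))).
  assert (0 <= prodR (fun a => 1 - a) l)
    by (apply prodR_nonneg; intros b Hb; destruct (H b (or_intror Hb)); lra).
  assert (0 <= sumR (fun a => a) l) by (apply sumR_nonneg; intros b Hb; destruct (H b (or_intror Hb)); lra).
  nra.
Qed.

Lemma prodR_inv_le {A} (u : A -> R) l :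
  (forall a, In a l -> 0 <= u a < 1) -> sumR u l < 1 ->
  prodR (fun a => 1 / (1 - u a)) l <= 1 / (1 - sumR u l).
Proof.
  intros Hu Hs. assert (Hpos : forall a, In a l -> 0 < 1 - u a) by (intros a Ha; destruct (Hu a Ha); lra).
  pose proof (prodR_one_minus_ge (map u l)) as H. rewrite sumR_map, prodR_map in H.
  assert (1 - sumR u l <= prodR (fun a => 1 - u a) l) as H'.
  { apply H. intros a Ha. apply in_map_iff in Ha as [c [<- Hc]]. destruct (Hu c Hc); lra. }
  rewrite (prodR_inv (fun a => 1 - u a)) by exact Hpos.
  unfold Rdiv. rewrite !Rmult_1_l. apply Rinv_le_contravar; lra.
Qed.

Lemma prodR_inv_exp {A} (u : A -> R) l :
  (forall a, In a l -> 0 <= u a < 1) ->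
  prodR (fun a => 1 / (1 - u a)) l = exp (sumR (fun a => - ln (1 - u a)) l).
Proof.
  induction l; intros H; [rewrite prodR_nil, sumR_nil, exp_0; auto|].
  rewrite prodR_cons, sumR_cons, exp_plus, IHl by (intros; apply H; right; auto).
  f_equal. destruct (H a (or_introl eq_refl)). rewrite exp_Ropp, exp_ln by lra. field. lra.
Qed.

Lemma sumR_sum_n (a : nat -> R) N : sumR a (seq 0 (S N)) = sum_n a N.
Proof.
  induction N.
  - rewrite sum_O. simpl. rewrite sumR_cons, sumR_nil; lra.
  - rewrite sum_Sn, seq_S, sumR_app, IHN, sumR_cons, sumR_nil. simpl. unfold plus; simpl. lra.
Qed.

Lemma sumR_le_Series (a : nat -> R) N :
  (forall n, 0 <= a n) -> ex_series a -> sumR a (seq 0 (S N)) <= Series a.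
Proof.
  intros Hp He. rewrite sumR_sum_n. apply (is_lim_seq_incr_compare (sum_n a)).
  - apply Series_correct, He.
  - intros n. rewrite sum_Sn. unfold plus; simpl. specialize (Hp (S n)). lra.
Qed.

Lemma Series_le_of_sumR_le (a : nat -> R) c :
  ex_series a -> (forall N, sumR a (seq 0 (S N)) <= c) -> Series a <= c.
Proof.
  intros He H. enough (Rbar_le (Series a) c) by auto.
  apply (is_lim_seq_le (sum_n a) (fun _ => c)); [|apply Series_correct, He|apply is_lim_seq_const].
  intros N. rewrite <- sumR_sum_n. apply H.
Qed.

Lemma is_lim_seq_geom_sum u :
  0 <= u < 1 -> is_lim_seq (fun J => sumR (fun j => u ^ j) (seq 0 (S J))) (1 / (1 - u)).
Proof.
  intros Hu. apply (is_lim_seq_ext (sum_n (fun j => u ^ j))); [intros; symmetry; apply sumR_sum_n|].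
  replace (1 / (1 - u)) with (/ (1 - u)) by (field; lra).
  apply is_series_geom. rewrite Rabs_right; lra.
Qed.

Lemma is_lim_seq_prodR {A} (f : nat -> A -> R) (g : A -> R) l :
  (forall a, In a l -> is_lim_seq (fun n => f n a) (g a)) ->
  is_lim_seq (fun n => prodR (f n) l) (prodR g l).
Proof.
  induction l as [|a l IH]; intros H.
  - rewrite prodR_nil. apply (is_lim_seq_ext (fun _ => 1)); [intros; rewrite prodR_nil; auto|].
    apply is_lim_seq_const.
  - rewrite prodR_cons. apply (is_lim_seq_ext (fun n => f n a * prodR (f n) l)).
    + intros n. rewrite prodR_cons; auto.
    + apply is_lim_seq_mult'; [apply H; left; auto|apply IH; intros; apply H; right; auto].
Qed.

Lemma prod_geom_le {A} (u : A -> R) l C :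
  (forall a, In a l -> 0 <= u a < 1) ->
  (forall J, prodR (fun a => sumR (fun j => u a ^ j) (seq 0 (S J))) l <= C) ->
  prodR (fun a => 1 / (1 - u a)) l <= C.
Proof.
  intros Hu H. enough (Rbar_le (prodR (fun a => 1 / (1 - u a)) l) C) by auto.
  apply (is_lim_seq_le _ (fun _ => C) _ _ H); [|apply is_lim_seq_const].
  apply is_lim_seq_prodR. intros a Ha. apply is_lim_seq_geom_sum, Hu, Ha.
Qed.

(** * Multisets of classes and generating functions *)

Lemma sumR_reps_in Q ks (G : nat -> R) :
  sumR (fun c => G (leaves c)) (reps_in Q ks) = sumR (fun k => hier_gf Q k * G k) ks.
Proof.
  unfold reps_in. rewrite sumR_flat_map. apply sumR_ext. intros k _.
  rewrite hier_gf_reps, <- sumR_const. apply sumR_ext.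
  intros c Hc. apply In_reps in Hc as [_ [-> _]]. reflexivity.
Qed.

Lemma sumR_le_reps_in {A} Q ks (V : list A) (F : A -> tree) (G : nat -> R) :
  (forall k, 0 <= G k) -> NoDup V ->
  (forall v, In v V -> exists k, In k ks /\ hier_of_size Q k (F v)) ->
  (forall v v', In v V -> In v' V -> iso (F v) (F v') -> v = v') ->
  sumR (fun v => G (leaves (F v))) V <= sumR (fun k => hier_gf Q k * G k) ks.
Proof.
  intros HG HV HF Hinj. rewrite <- sumR_reps_in.
  set (pick v := epsilon (inhabits (F v)) (fun c => In c (reps_in Q ks) /\ iso (F v) c)).
  assert (Hpick : forall v, In v V -> In (pick v) (reps_in Q ks) /\ iso (F v) (pick v)).
  { intros v Hv. apply epsilon_spec. destruct (HF v Hv) as [k [Hk HP]].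
    eapply reps_in_cover; eauto. }
  apply Rle_trans with (sumR (fun c => G (leaves c)) (map pick V)).
  - rewrite sumR_map. right. apply sumR_ext. intros v Hv.
    rewrite (leaves_iso _ _ (proj2 (Hpick v Hv))). reflexivity.
  - apply sumR_incl; auto.
    + apply FinFun.Injective_map_NoDup_in; auto. intros v v' Hv Hv' E. apply Hinj; auto.
      apply (iso_trans _ (pick v)); [apply Hpick; auto|]. rewrite E. apply iso_sym, Hpick; auto.
    + intros c Hc. apply in_map_iff in Hc as [v [<- Hv]]. apply Hpick, Hv.
Qed.

Lemma hier_gf_nonneg Q k : 0 <= hier_gf Q k.
Proof. rewrite hier_gf_reps. apply pos_INR. Qed.

Lemma hier_gf_1 Q : Q (Node []) -> hier_gf Q 1 = 1.
Proof.
  intros HQ. rewrite hier_gf_reps.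
  assert (Hleaf : forall t, In t (reps Q 1) -> t = Node []).
  { intros t Ht. apply In_reps in Ht as [? [? _]]. apply hierarchy_leaf; auto. }
  destruct (reps_cover Q 1 (Node [])) as [u [Hu _]]; [repeat split; auto; discriminate|].
  pose proof (reps_noniso Q 1) as Hn.
  destruct (reps Q 1) as [|a [|b l]]; [contradiction|reflexivity|exfalso].
  inversion Hn as [|? ? Ha _]; subst. inversion Ha as [|? ? Hab _]; subst.
  rewrite (Hleaf a), (Hleaf b) in Hab by (simpl; auto). apply Hab, iso_refl.
Qed.

Lemma hier_gf_mono (Q1 Q2 : tree -> Prop) k :
  (forall t, Q1 t -> Q2 t) -> hier_gf Q1 k <= hier_gf Q2 k.
Proof.
  intros H. assert (Hle : sumR (fun _ => 1) (reps Q1 k) <= sumR (fun n => hier_gf Q2 n * 1) [k]).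
  { apply (sumR_le_reps_in Q2 [k] (reps Q1 k) (fun t => t) (fun _ => 1)).
    - intros; lra.
    - apply noniso_list_NoDup, reps_noniso.
    - intros v Hv. apply In_reps in Hv as [? [? ?]]. exists k; split; [left; auto|repeat split; auto].
    - intros v v' Hv Hv'. apply noniso_list_eq with (reps Q1 k); auto. apply reps_noniso. }
  rewrite sumR_const, sumR_cons, sumR_nil, <- hier_gf_reps in Hle. lra.
Qed.

Lemma sumR_box ws J x :
  sumR (fun mu => x ^ weight ws mu) (box (length ws) J) =
  prodR (fun w => sumR (fun j => (x ^ w) ^ j) (seq 0 (S J))) ws.
Proof.
  induction ws as [|w ws IH]; [simpl; rewrite prodR_nil, sumR_cons, sumR_nil; simpl; lra|].
  cbn [length box]. rewrite sumR_flat_map, prodR_cons, Rmult_comm, <- sumR_scal.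
  apply sumR_ext. intros j _. rewrite sumR_map, <- IH, Rmult_comm, <- sumR_scal.
  apply sumR_ext. intros mu _. cbn [weight]. rewrite pow_add, <- pow_mult, Nat.mul_comm. lra.
Qed.

(* Distinct exponent vectors are distinct monomials of the product of geometric series. *)
Lemma sumR_weight_le_prod ws (W : list (list nat)) x :
  0 <= x < 1 -> (forall w, In w ws -> (1 <= w)%nat) ->
  NoDup W -> (forall mu, In mu W -> length mu = length ws) ->
  sumR (fun mu => x ^ weight ws mu) W <= prodR (fun w => 1 / (1 - x ^ w)) ws.
Proof.
  intros Hx Hws Hnd Hl. set (J := list_sum (map (@list_sum) W)).
  apply Rle_trans with (sumR (fun mu => x ^ weight ws mu) (box (length ws) J)).
  - apply sumR_incl; [intros; apply pow_le; lra|auto|]. intros mu Hmu. apply In_box; auto.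
    intros j Hj. pose proof (list_sum_map_In_le (@list_sum) W mu Hmu).
    pose proof (list_sum_map_In_le (fun i => i) mu j Hj). rewrite map_id in *. lia.
  - rewrite sumR_box. apply prodR_le. intros w Hw. pose proof (pow_lt_1 x w Hx (Hws w Hw)).
    split; [apply sumR_nonneg; intros; apply pow_le; lra|]. apply geom_sum_le; lra.
Qed.

Lemma sumR_small_vecs ws x :
  sumR (fun mu => x ^ weight ws mu) (small_vecs (length ws)) = 1 + sumR (fun w => x ^ w) ws.
Proof.
  unfold small_vecs. rewrite sumR_cons, weight_zero. f_equal.
  induction ws as [|w ws IH]; simpl; [rewrite !sumR_nil; auto|].
  rewrite !sumR_cons, sumR_map, <- IH. cbn [weight]. rewrite weight_zero.
  replace (1 * w + 0)%nat with w by lia. reflexivity.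
Qed.

Section SubtreeClosedClass.

Variable Q : tree -> Prop.
Hypothesis Q_child : forall l a, Q (Node l) -> In a l -> Q a.

Lemma children_covered N t :
  In t (reps_in Q (seq 2 N)) -> covered (reps_in Q (seq 1 N)) (children t).
Proof.
  intros Ht a Ha. apply In_reps_in in Ht as [k [Hk [Hh [Hl HQ]]]]. apply in_seq in Hk.
  destruct t as [l]. simpl in Ha.
  apply (reps_in_cover Q (seq 1 N) a (leaves a)).
  - apply in_seq. pose proof (hierarchy_child_lt a l Hh Ha). pose proof (leaves_pos a). lia.
  - repeat split; [eapply hierarchy_child|eapply Q_child]; eauto.
Qed.

Lemma children_length N t : In t (reps_in Q (seq 2 N)) -> (2 <= length (children t))%nat.
Proof.
  intros Ht. apply In_reps_in in Ht as [k [Hk [Hh [Hl _]]]]. apply in_seq in Hk.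
  destruct t as [[|a l]]; [simpl in Hl; lia|]. apply hierarchy_arity; auto; discriminate.
Qed.

Lemma child_vecs_NoDup N :
  NoDup (map (fun t => mult_vec (reps_in Q (seq 1 N)) (children t)) (reps_in Q (seq 2 N))).
Proof.
  pose proof (reps_in_noniso Q (seq 2 N) (seq_NoDup _ _)) as HR.
  apply FinFun.Injective_map_NoDup_in; [|apply noniso_list_NoDup; auto].
  intros [l] [l'] Ht Ht' Hv. apply (noniso_list_eq _ _ _ HR Ht Ht').
  apply (iso_of_mult_vec (reps_in Q (seq 1 N))); auto.
  - exact (children_covered N (Node l) Ht).
  - exact (children_covered N (Node l') Ht').
Qed.

Lemma sumR_child_vecs N x :
  sumR (fun mu => x ^ weight (map leaves (reps_in Q (seq 1 N))) mu)
       (map (fun t => mult_vec (reps_in Q (seq 1 N)) (children t)) (reps_in Q (seq 2 N))) =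
  sumR (fun k => hier_gf Q k * x ^ k) (seq 2 N).
Proof.
  rewrite sumR_map, <- sumR_reps_in. apply sumR_ext. intros t Ht.
  rewrite weight_mult_vec by (apply reps_in_noniso, seq_NoDup || apply children_covered, Ht).
  pose proof (children_length N t Ht). destruct t as [[|a l]]; simpl in *; [lia|reflexivity].
Qed.

(* Exponent vectors over the classes of size <= N: the zero vector, the unit vectors, the
   children of the classes of size 2..N+1 and the extra vectors E are pairwise distinct. *)
Theorem gf_le_multiset_prod N x (E : list (list nat)) :
  0 <= x < 1 ->
  let L := reps_in Q (seq 1 N) in
  NoDup E -> (forall mu, In mu E -> length mu = length L /\ (2 <= list_sum mu)%nat) ->
  (forall mu t, In mu E -> In t (reps_in Q (seq 2 N)) -> mult_vec L (children t) <> mu) ->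
  1 + sumR (fun k => hier_gf Q k * x ^ k) (seq 1 N) + sumR (fun k => hier_gf Q k * x ^ k) (seq 2 N)
    + sumR (fun mu => x ^ weight (map leaves L) mu) E
  <= prodR (fun c => 1 / (1 - x ^ leaves c)) L.
Proof.
  intros Hx L HEnd HE HEc. set (ws := map leaves L).
  set (V := map (fun t => mult_vec L (children t)) (reps_in Q (seq 2 N))).
  set (Z := small_vecs (length ws)).
  assert (HV : forall mu, In mu V -> length mu = length ws /\ (2 <= list_sum mu)%nat).
  { intros mu Hmu. apply in_map_iff in Hmu as [t [<- Ht]].
    split; [unfold mult_vec, ws; rewrite !length_map; auto|].
    rewrite list_sum_mult_vec by (apply reps_in_noniso, seq_NoDup || apply children_covered, Ht).
    apply (children_length N t Ht). }
  assert (HW : NoDup (V ++ E ++ Z)).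
  { apply NoDup_app; [apply child_vecs_NoDup|apply NoDup_app; [exact HEnd|apply small_vecs_NoDup|]|].
    - intros mu Hmu Hz. destruct (HE mu Hmu). destruct (In_small_vecs _ mu Hz); lia.
    - intros mu Hmu Hin. apply in_app_or in Hin as [Hin|Hin].
      + apply in_map_iff in Hmu as [t [Ev Ht]]. exact (HEc mu t Hin Ht Ev).
      + destruct (HV mu Hmu). destruct (In_small_vecs _ mu Hin); lia. }
  assert (Hws : forall w, In w ws -> (1 <= w)%nat).
  { intros w Hw. apply in_map_iff in Hw as [c [<- _]]. apply leaves_pos. }
  assert (HWl : forall mu, In mu (V ++ E ++ Z) -> length mu = length ws).
  { intros mu Hmu. apply in_app_or in Hmu as [H|H]; [apply HV; auto|].
    apply in_app_or in H as [H|H]; [unfold ws; rewrite length_map; apply HE; auto|].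
    apply In_small_vecs; auto. }
  pose proof (sumR_weight_le_prod ws (V ++ E ++ Z) x Hx Hws HW HWl) as Hle.
  rewrite !sumR_app in Hle. unfold Z in Hle. rewrite sumR_small_vecs in Hle.
  unfold V, ws, L in Hle |- *. rewrite sumR_child_vecs in Hle.
  rewrite prodR_map, sumR_map, (sumR_reps_in Q (seq 1 N) (fun k => x ^ k)) in Hle. lra.
Qed.

End SubtreeClosedClass.

Notation any_tree := (fun _ : tree => True).
Notation hcount := (hier_gf any_tree).

Section TruncatedMultisets.

Variables (K J : nat) (x : R).
Hypothesis Hx : 0 <= x < 1.

Let L := reps_in any_tree (seq 1 K).
Let ws := map leaves L.
Let B := box (length ws) J.
Let M := list_sum (map (weight ws) B).

Let L_noniso : noniso_list L.
Proof. apply reps_in_noniso, seq_NoDup. Qed.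

Let length_In_B mu : In mu B -> length mu = length L.
Proof.
  intros Hmu. apply length_In_box in Hmu. unfold ws in Hmu. rewrite length_map in Hmu; auto.
Qed.

Let hierarchy_L c : In c L -> hierarchy c.
Proof. intros H. apply In_reps_in in H as [k [_ [H _]]]; auto. Qed.

Lemma sumR_box_no_child :
  sumR (fun mu => x ^ weight ws mu) (filter (fun mu => list_sum mu =? 0)%nat B) <= 1.
Proof.
  apply Rle_trans with (sumR (fun mu => x ^ weight ws mu) [repeat 0%nat (length L)]).
  - apply sumR_incl; [intros; apply pow_le; lra|apply NoDup_filter, box_NoDup|].
    intros mu Hmu. apply filter_In in Hmu as [Hmu E]. apply Nat.eqb_eq in E. left.
    rewrite (list_sum_0_repeat mu E), (length_In_B mu Hmu); auto.
  - rewrite sumR_cons, sumR_nil, weight_zero. simpl; lra.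
Qed.

Lemma sumR_box_one_child :
  sumR (fun mu => x ^ weight ws mu) (filter (fun mu => list_sum mu =? 1)%nat B)
  <= sumR (fun n => hcount n * x ^ n) (seq 1 M).
Proof.
  assert (Hsingle : forall mu, In mu (filter (fun mu => list_sum mu =? 1)%nat B) ->
            exists c, of_mults L mu = [c] /\ In c L /\ weight ws mu = leaves c).
  { intros mu Hmu. apply filter_In in Hmu as [Hmu E]. apply Nat.eqb_eq in E.
    pose proof (length_of_mults L mu (length_In_B mu Hmu)) as Hl. rewrite E in Hl.
    pose proof (leaves_of_mults L mu) as Hw.
    destruct (of_mults L mu) as [|c [|d l]] eqn:Ec; simpl in Hl; try lia.
    exists c; repeat split; [eapply In_of_mults; rewrite Ec; left; auto|]. unfold ws. simpl in Hw; lia. }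
  set (single mu := hd (Node []) (of_mults L mu)).
  apply Rle_trans
    with (sumR (fun mu => x ^ leaves (single mu)) (filter (fun mu => list_sum mu =? 1)%nat B)).
  { right. apply sumR_ext. intros mu Hmu. destruct (Hsingle mu Hmu) as [c [Ec [_ Hw]]].
    unfold single. rewrite Ec, Hw. reflexivity. }
  apply (sumR_le_reps_in any_tree (seq 1 M) _ single (fun n => x ^ n));
    [intros; apply pow_le; lra|apply NoDup_filter, box_NoDup| |].
  - intros mu Hmu. destruct (Hsingle mu Hmu) as [c [Ec [Hc Hw]]]. unfold single; rewrite Ec. simpl.
    exists (leaves c). split; [|repeat split; auto].
    apply filter_In in Hmu as [Hmu _]. apply in_seq.
    pose proof (list_sum_map_In_le (weight ws) B mu Hmu). pose proof (leaves_pos c). unfold M; lia.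
  - intros mu mu' Hmu Hmu' Hi.
    destruct (Hsingle mu Hmu) as [c [Ec [Hc _]]]. destruct (Hsingle mu' Hmu') as [c' [Ec' [Hc' _]]].
    apply filter_In in Hmu as [Hmu _]. apply filter_In in Hmu' as [Hmu' _].
    unfold single in Hi; rewrite Ec, Ec' in Hi; simpl in Hi.
    rewrite <- (mult_vec_of_mults L mu), <- (mult_vec_of_mults L mu'), Ec, Ec'
      by (exact L_noniso || apply length_In_B; auto).
    apply mult_vec_iso. apply (iso_node [c] [c]); [apply Permutation_refl|repeat constructor; auto].
Qed.

Lemma sumR_box_many_children :
  sumR (fun mu => x ^ weight ws mu)
    (filter (fun mu => negb (list_sum mu =? 1)%nat) (filter (fun mu => negb (list_sum mu =? 0)%nat) B))
  <= sumR (fun n => hcount n * x ^ n) (seq 2 M).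
Proof.
  set (B2 := filter _ (filter _ B)).
  assert (HB2 : forall mu, In mu B2 -> In mu B /\ (2 <= length (of_mults L mu))%nat).
  { intros mu Hmu. apply filter_In in Hmu as [Hmu E1]. apply filter_In in Hmu as [Hmu E0].
    apply Bool.negb_true_iff, Nat.eqb_neq in E0, E1.
    rewrite length_of_mults by (apply length_In_B; auto). split; auto; lia. }
  assert (Hw : forall mu, In mu B2 -> weight ws mu = leaves (Node (of_mults L mu))).
  { intros mu Hmu. destruct (HB2 mu Hmu) as [_ Hl]. rewrite leaves_Node, leaves_of_mults.
    destruct (of_mults L mu); simpl in Hl; [lia|reflexivity]. }
  rewrite (sumR_ext _ (fun mu => x ^ leaves (Node (of_mults L mu)))) by (intros mu Hmu; rewrite Hw; auto).
  apply (sumR_le_reps_in any_tree (seq 2 M));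
    [intros; apply pow_le; lra|repeat apply NoDup_filter; apply box_NoDup| |].
  - intros mu Hmu. destruct (HB2 mu Hmu) as [HmuB Hl].
    exists (leaves (Node (of_mults L mu))). split; [|split; [|split; auto]].
    + apply in_seq. rewrite <- Hw by auto.
      pose proof (list_sum_map_In_le (weight ws) B mu HmuB).
      assert (Hws : forall w, In w ws -> (1 <= w)%nat).
      { intros w Hw'. apply in_map_iff in Hw' as [c [<- _]]. apply leaves_pos. }
      pose proof (list_sum_le_weight ws mu Hws) as Hsw.
      rewrite length_of_mults in Hl by (apply length_In_B; auto).
      unfold ws in Hsw at 1. rewrite length_map, <- (length_In_B mu HmuB) in Hsw.
      specialize (Hsw eq_refl). unfold M; lia.
    + apply hierarchy_Node. split; [lia|]. apply Forall_forall. intros a Ha.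
      apply hierarchy_L, (In_of_mults L mu), Ha.
  - intros mu mu' Hmu Hmu' Hi.
    rewrite <- (mult_vec_of_mults L mu), <- (mult_vec_of_mults L mu')
      by (exact L_noniso || apply length_In_B, HB2; auto).
    apply mult_vec_iso, Hi.
Qed.

Theorem multiset_prod_le_gf :
  prodR (fun c => sumR (fun j => (x ^ leaves c) ^ j) (seq 0 (S J))) L
  <= 1 + sumR (fun n => hcount n * x ^ n) (seq 1 M)
       + sumR (fun n => hcount n * x ^ n) (seq 2 M).
Proof.
  replace (prodR (fun c => sumR (fun j => (x ^ leaves c) ^ j) (seq 0 (S J))) L)
    with (sumR (fun mu => x ^ weight ws mu) B)
    by (unfold B, ws; rewrite sumR_box, prodR_map; reflexivity).
  set (nonzero := filter (fun mu => negb (list_sum mu =? 0)%nat) B).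
  rewrite (sumR_filter _ (fun mu => list_sum mu =? 0)%nat B).
  rewrite (sumR_filter _ (fun mu => list_sum mu =? 1)%nat nonzero).
  replace (filter (fun mu => list_sum mu =? 1)%nat nonzero)
    with (filter (fun mu => list_sum mu =? 1)%nat B).
  2:{ unfold nonzero. generalize B as l. induction l as [|mu l IH]; simpl; auto.
      rewrite IH. destruct (Nat.eqb_spec (list_sum mu) 0) as [E|E]; simpl; auto.
      rewrite E. reflexivity. }
  pose proof sumR_box_no_child. pose proof sumR_box_one_child. pose proof sumR_box_many_children.
  unfold nonzero. lra.
Qed.

End TruncatedMultisets.

(** * The a priori bound and the excess function *)

Lemma hcount_partial_sum_le N : sumR (fun k => hcount k * (3/20) ^ k) (seq 1 N) <= 1/4.
Proof.
  set (x := 3/20). induction N as [|N IH]; [simpl; rewrite sumR_nil; lra|].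
  change (seq 1 (S N)) with (1%nat :: seq 2 N). rewrite sumR_cons, hier_gf_1 by exact I.
  set (y := sumR (fun k => hcount k * x ^ k) (seq 1 N)) in *.
  assert (Hy : 0 <= y)
    by (apply sumR_nonneg; intros; apply Rmult_le_pos; [apply hier_gf_nonneg|apply pow_le; unfold x; lra]).
  pose proof (gf_le_multiset_prod any_tree (fun _ _ _ _ => I) N x [] ltac:(unfold x; lra)) as HU.
  cbv zeta in HU. rewrite sumR_nil in HU.
  specialize (HU (NoDup_nil _) ltac:(intros ? []) ltac:(intros ? ? [])).
  rewrite prodR_inv_le in HU.
  - rewrite (sumR_reps_in any_tree (seq 1 N) (fun k => x ^ k)) in HU. fold y in HU.
    assert (1 / (1 - y) - 1 - y <= 1/12).
    { apply Rmult_le_reg_r with (1 - y); [lra|].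
      replace ((1 / (1 - y) - 1 - y) * (1 - y)) with (y * y) by (field; lra). nra. }
    unfold x in *. simpl pow. lra.
  - intros c _. apply pow_lt_1; [unfold x; lra|apply leaves_pos].
  - rewrite (sumR_reps_in any_tree (seq 1 N) (fun k => x ^ k)). fold y. lra.
Qed.

Lemma hcount_le k : hcount k <= 1/4 * (20/3) ^ k.
Proof.
  destruct k as [|k]; [simpl; lra|].
  assert (Hk : hcount (S k) * (3/20) ^ S k <= 1/4).
  { eapply Rle_trans; [|apply (hcount_partial_sum_le (S k))].
    apply (sumR_In_le (fun k => hcount k * (3/20) ^ k)); [|apply in_seq; lia].
    intros; apply Rmult_le_pos; [apply hier_gf_nonneg|apply pow_le; lra]. }
  assert (E : (20/3) ^ S k * (3/20) ^ S k = 1)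
    by (rewrite <- Rpow_mult_distr; replace (20/3 * (3/20)) with 1 by lra; apply pow1).
  assert (0 < (20/3) ^ S k) by (apply pow_lt; lra). pose proof (hier_gf_nonneg any_tree (S k)). nra.
Qed.

Lemma ln_le_sub_1 t : 0 < t -> ln t <= t - 1.
Proof.
  intros Ht. rewrite <- (ln_exp (t - 1)). apply ln_le; auto. pose proof (exp_ineq1_le (t - 1)). lra.
Qed.

Definition ln_excess (u : R) : R := - ln (1 - u) - u.

Lemma ln_excess_0 : ln_excess 0 = 0.
Proof. unfold ln_excess. replace (1 - 0) with 1 by lra. rewrite ln_1. lra. Qed.

Lemma ln_excess_nonneg u : 0 <= u < 1 -> 0 <= ln_excess u.
Proof. intros Hu. unfold ln_excess. pose proof (ln_le_sub_1 (1 - u) ltac:(lra)). lra. Qed.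

Lemma ln_excess_sub_le u v : 0 <= u <= v -> v <= 1/2 -> ln_excess v - ln_excess u <= 2 * v * (v - u).
Proof.
  intros Hu Hv. unfold ln_excess.
  assert (ln (1 - u) - ln (1 - v) <= (1 - u) / (1 - v) - 1).
  { rewrite <- ln_div by lra. apply ln_le_sub_1, Rdiv_lt_0_compat; lra. }
  assert ((1 - u) / (1 - v) - 1 - (v - u) = (v - u) * v / (1 - v)) by (field; lra).
  assert ((v - u) * v / (1 - v) <= 2 * v * (v - u)); [|lra].
  apply Rmult_le_reg_r with (1 - v); [lra|]. unfold Rdiv. rewrite Rmult_assoc, Rinv_l by lra.
  assert (0 <= (v - u) * v) by nra. nra.
Qed.

Lemma ln_excess_le v : 0 <= v <= 1/2 -> ln_excess v <= 2 * v ^ 2.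
Proof.
  intros Hv. pose proof (ln_excess_sub_le 0 v ltac:(lra) ltac:(lra)). rewrite ln_excess_0 in H. simpl; nra.
Qed.

Lemma multiset_prod_exp Q N x :
  0 <= x < 1 ->
  prodR (fun c => 1 / (1 - x ^ leaves c)) (reps_in Q (seq 1 N)) =
  exp (sumR (fun k => hier_gf Q k * x ^ k) (seq 1 N)
       + sumR (fun k => hier_gf Q k * ln_excess (x ^ k)) (seq 1 N)).
Proof.
  intros Hx. rewrite prodR_inv_exp by (intros c _; apply pow_lt_1; [lra|apply leaves_pos]).
  rewrite (sumR_reps_in Q (seq 1 N) (fun k => - ln (1 - x ^ k))), <- sumR_plus.
  f_equal. apply sumR_ext. intros k _. unfold ln_excess. ring.
Qed.

Lemma pow_sub_le x y k : 0 <= x <= y -> y ^ S k - x ^ S k <= INR (S k) * y ^ k * (y - x).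
Proof.
  intros Hxy. induction k; [simpl; lra|].
  assert (HX : 0 <= x ^ S k <= y ^ S k) by (split; [apply pow_le|apply pow_incr]; lra).
  assert (y * (y ^ S k - x ^ S k) <= y * (INR (S k) * y ^ k * (y - x))) by (apply Rmult_le_compat_l; lra).
  assert (x ^ S k * (y - x) <= y ^ S k * (y - x)) by (apply Rmult_le_compat_r; lra).
  replace (y ^ S (S k) - x ^ S (S k)) with (y * (y ^ S k - x ^ S k) + x ^ S k * (y - x)) by (simpl; ring).
  replace (INR (S (S k)) * y ^ S k * (y - x)) with (y * (INR (S k) * y ^ k * (y - x)) + y ^ S k * (y - x))
    by (rewrite (S_INR (S k)); simpl; ring).
  lra.
Qed.

Lemma INR_le_pow_3_2 k : INR k <= (3/2) ^ k.
Proof.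
  induction k as [|k IH]; [simpl; lra|].
  rewrite S_INR. change ((3/2) ^ S k) with (3/2 * (3/2) ^ k).
  destruct k as [|[|k]]; [simpl; lra|simpl; lra|].
  assert (2 <= INR (S (S k))) by (rewrite !S_INR; pose proof (pos_INR k); lra). lra.
Qed.

Definition excess_term (x : R) (k : nat) : R := hcount k * ln_excess (x ^ k).

(* The estimates live on [0, 31/100]: it contains 3/10, where [gap] is positive, and
   (20/3) (31/100)^2 < 1 keeps the a priori bound on [hcount] summable against x^(2k). *)
Lemma excess_term_bound x k : 0 <= x <= 31/100 -> 0 <= excess_term x k <= 1/2 * (13/20) ^ k.
Proof.
  intros Hx. unfold excess_term. destruct k as [|k]; [simpl; lra|].
  assert (Hxk : 0 <= x ^ S k <= x) by (split; [apply pow_le|apply pow_le_self]; lra || lia).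
  pose proof (ln_excess_nonneg (x ^ S k) ltac:(lra)) as Hq0.
  pose proof (ln_excess_le (x ^ S k) ltac:(lra)) as Hq.
  rewrite <- pow_mult, Nat.mul_comm, pow_mult in Hq.
  pose proof (hier_gf_nonneg any_tree (S k)).
  split; [apply Rmult_le_pos; auto|].
  assert (Hr : (20/3) ^ S k * (x ^ 2) ^ S k <= (13/20) ^ S k).
  { rewrite <- Rpow_mult_distr. apply pow_incr. split; [nra|]. simpl. nra. }
  assert (0 <= (20/3) ^ S k) by (apply pow_le; lra). assert (0 <= (x ^ 2) ^ S k) by (apply pow_le; nra).
  apply Rle_trans with (1/4 * (20/3) ^ S k * (2 * (x ^ 2) ^ S k)); [|nra].
  apply Rmult_le_compat; auto. apply hcount_le.
Qed.

Lemma excess_term_sub_le x y k :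
  0 <= x <= y -> y <= 31/100 -> excess_term y k - excess_term x k <= (y - x) * (50/31 * (39/40) ^ k).
Proof.
  intros Hxy Hy. unfold excess_term. destruct k as [|n]; [simpl; nra|]. set (Y := 31/100) in *.
  assert (HY : 0 <= Y ^ n /\ 0 <= (3/2) ^ S n) by (split; apply pow_le; unfold Y; lra).
  assert (Hpow : y ^ S n - x ^ S n <= (3/2) ^ S n * Y ^ n * (y - x)).
  { eapply Rle_trans; [apply pow_sub_le; lra|]. apply Rmult_le_compat_r; [lra|].
    apply Rmult_le_compat; [apply pos_INR|apply pow_le; lra|apply INR_le_pow_3_2|apply pow_incr; lra]. }
  assert (Hln : ln_excess (y ^ S n) - ln_excess (x ^ S n) <= 2 * Y ^ S n * ((3/2) ^ S n * Y ^ n * (y - x))).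
  { assert (0 <= x ^ S n <= y ^ S n) by (split; [apply pow_le|apply pow_incr]; lra).
    assert (y ^ S n <= Y ^ S n) by (apply pow_incr; lra).
    assert (Y ^ S n <= Y) by (apply pow_le_self; unfold Y; lra || lia).
    assert (0 <= Y ^ S n) by (apply pow_le; unfold Y; lra).
    eapply Rle_trans; [apply ln_excess_sub_le; unfold Y in *; lra|].
    apply Rle_trans with (2 * Y ^ S n * (y ^ S n - x ^ S n)); [apply Rmult_le_compat_r; lra|].
    apply Rmult_le_compat_l, Hpow; lra. }
  assert (Hcoef : 1/4 * (20/3) ^ S n * (2 * Y ^ S n * ((3/2) ^ S n * Y ^ n)) <= 50/31 * (39/40) ^ S n).
  { replace (1/4 * (20/3) ^ S n * (2 * Y ^ S n * ((3/2) ^ S n * Y ^ n)))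
      with (50/31 * (20/3 * (3/2) * Y * Y) ^ S n) by (rewrite !Rpow_mult_distr; unfold Y; simpl; field).
    apply Rmult_le_compat_l; [lra|]. apply pow_incr. unfold Y; lra. }
  set (c := 2 * Y ^ S n * ((3/2) ^ S n * Y ^ n)) in *.
  assert (Hc : 0 <= c) by (unfold c; repeat apply Rmult_le_pos; try lra; apply pow_le; unfold Y; lra).
  assert (Hhc : hcount (S n) * c <= 50/31 * (39/40) ^ S n).
  { eapply Rle_trans; [|exact Hcoef]. apply Rmult_le_compat_r; [exact Hc|apply hcount_le]. }
  rewrite <- Rmult_minus_distr_l. eapply Rle_trans.
  - apply Rmult_le_compat_l; [apply hier_gf_nonneg|exact Hln].
  - replace (2 * Y ^ S n * ((3/2) ^ S n * Y ^ n * (y - x))) with (c * (y - x)) by (unfold c; ring).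
    rewrite <- Rmult_assoc, Rmult_comm. apply Rmult_le_compat_l; lra.
Qed.

Definition excess (x : R) : R := Series (excess_term x).

Lemma ex_series_excess_term x : 0 <= x <= 31/100 -> ex_series (excess_term x).
Proof.
  intros Hx. apply (ex_series_le (excess_term x) (fun k => (13/20) ^ k)).
  - intros k. destruct (excess_term_bound x k Hx). change (Rabs (excess_term x k) <= (13/20) ^ k).
    pose proof (pow_le (13/20) k ltac:(lra)). rewrite Rabs_right; lra.
  - apply ex_series_geom. rewrite Rabs_right; lra.
Qed.

Lemma sumR_excess_term_le x N : 0 <= x <= 31/100 -> sumR (excess_term x) (seq 0 (S N)) <= excess x.
Proof.
  intros Hx. apply sumR_le_Series; [intros; apply excess_term_bound; auto|].
  apply ex_series_excess_term, Hx.
Qed.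

Lemma excess_nonneg x : 0 <= x <= 31/100 -> 0 <= excess x.
Proof.
  intros Hx. pose proof (sumR_excess_term_le x 0 Hx) as H. simpl seq in H.
  rewrite sumR_cons, sumR_nil in H. pose proof (excess_term_bound x 0 Hx). lra.
Qed.

Lemma excess_0 : excess 0 = 0.
Proof.
  apply Rle_antisym; [|apply excess_nonneg; lra].
  apply Series_le_of_sumR_le; [apply ex_series_excess_term; lra|]. intros N.
  apply Rle_trans with (sumR (fun _ => 0) (seq 0 (S N))); [|rewrite sumR_const; lra].
  apply sumR_le. intros [|k] _; unfold excess_term; [simpl; lra|].
  rewrite pow_i, ln_excess_0 by lia. lra.
Qed.

Lemma excess_sub_le x y : 0 <= x <= y -> y <= 31/100 -> excess y <= excess x + 2000/31 * (y - x).
Proof.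
  intros Hxy Hy. apply Series_le_of_sumR_le; [apply ex_series_excess_term; lra|]. intros N.
  apply Rle_trans with (sumR (excess_term x) (seq 0 (S N))
                        + (y - x) * (50/31 * sumR (fun k => (39/40) ^ k) (seq 0 (S N)))).
  - rewrite <- !sumR_scal, <- sumR_plus. apply sumR_le. intros k _.
    pose proof (excess_term_sub_le x y k Hxy Hy). lra.
  - pose proof (sumR_excess_term_le x N ltac:(lra)). pose proof (geom_sum_le (39/40) N ltac:(lra)).
    replace (1 / (1 - 39/40)) with 40 in * by lra. nra.
Qed.

Definition gap (x : R) : R := x + 1 - 2 * ln 2 + 2 * excess x.

Lemma ln_2_gt : 1/2 < ln 2.
Proof.
  rewrite <- (ln_exp (1/2)). apply ln_increasing; [apply exp_pos|].
  assert (exp (1/2) * exp (1/2) < 2 * 2); [|nra].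
  rewrite <- exp_plus. replace (1/2 + 1/2) with 1 by lra. pose proof exp_le_3. lra.
Qed.

Lemma ln_14_10_lt : ln (14/10) < 35/100.
Proof.
  rewrite <- (ln_exp (35/100)). apply ln_increasing; [lra|].
  replace (35/100) with (35/800 + 35/800 + 35/800 + 35/800 + 35/800 + 35/800 + 35/800 + 35/800) by lra.
  rewrite !exp_plus. pose proof (exp_ineq1_le (35/800)).
  assert (14/10 < (1 + 35/800) ^ 8) by (simpl; lra).
  assert ((1 + 35/800) ^ 8 <= exp (35/800) ^ 8) by (apply pow_incr; lra).
  simpl in *. lra.
Qed.

Lemma gap_0 : gap 0 < 0.
Proof. unfold gap. rewrite excess_0. pose proof ln_2_gt. lra. Qed.

Lemma gap_3_10 : 0 < gap (3/10).
Proof.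
  assert (H : excess_term (3/10) 1 <= excess (3/10)).
  { eapply Rle_trans; [|apply (sumR_excess_term_le _ 1); lra].
    apply sumR_In_le; [intros; apply excess_term_bound; lra|simpl; auto]. }
  unfold excess_term, ln_excess in H. rewrite hier_gf_1 in H by exact I.
  simpl pow in H. replace (1 - 3/10 * 1) with (7/10) in H by lra.
  pose proof ln_14_10_lt as L. replace (14/10) with (2 * (7/10)) in L by lra.
  rewrite ln_mult in L by lra. unfold gap. lra.
Qed.

Lemma gap_sub_le x y : 0 <= x <= y -> y <= 31/100 -> gap y <= gap x + (1 + 4000/31) * (y - x).
Proof. intros Hxy Hy. pose proof (excess_sub_le x y Hxy Hy). unfold gap. lra. Qed.

Lemma gap_pos_gt x : 0 <= x <= 31/100 -> 0 < gap x -> (2 * ln 2 - 1) / (1 + 4000/31) < x.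
Proof.
  intros Hx Hg. pose proof (gap_sub_le 0 x ltac:(lra) ltac:(lra)) as H.
  unfold gap at 2 in H. rewrite excess_0 in H.
  apply Rmult_lt_reg_r with (1 + 4000/31); [lra|]. unfold Rdiv. rewrite Rmult_assoc, Rinv_l by lra. lra.
Qed.

(** * Divergence of the series of all hierarchies *)

Lemma exp_le x y : x <= y -> exp x <= exp y.
Proof. intros [H|<-]; [apply Rlt_le, exp_increasing, H|apply Rle_refl]. Qed.

Lemma exp_ge_tangent_ln_2 z : 2 * (1 + z - ln 2) <= exp z.
Proof.
  replace z with (ln 2 + (z - ln 2)) at 2 by lra. rewrite exp_plus, exp_ln by lra.
  pose proof (exp_ineq1_le (z - ln 2)). lra.
Qed.

Section ConvergentHierarchySeries.

Variable x : R.
Hypothesis x_range : 0 < x <= 31/100.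
Hypothesis hcount_summable : ex_series (fun n => hcount n * x ^ n).

Let Hs := Series (fun n => hcount n * x ^ n).

Let hcount_partial_le K : sumR (fun k => hcount k * x ^ k) (seq 1 K) <= Hs.
Proof.
  rewrite <- sumR_seq_0 by (simpl; ring). apply sumR_le_Series; [|exact hcount_summable].
  intros k. apply Rmult_le_pos; [apply hier_gf_nonneg|apply pow_le; lra].
Qed.

Lemma multiset_prod_le_series K :
  prodR (fun c => 1 / (1 - x ^ leaves c)) (reps_in any_tree (seq 1 K)) <= 1 + 2 * Hs - x.
Proof.
  apply prod_geom_le; [intros c _; apply pow_lt_1; [lra|apply leaves_pos]|]. intros J.
  eapply Rle_trans; [apply (multiset_prod_le_gf K J x); lra|].
  set (M := list_sum _). pose proof (hcount_partial_le M) as H1. pose proof (hcount_partial_le (S M)) as H2.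
  change (seq 1 (S M)) with (1%nat :: seq 2 M) in H2. rewrite sumR_cons, hier_gf_1 in H2 by exact I.
  simpl pow in H2. lra.
Qed.

Lemma exp_series_le : exp (Hs + excess x) <= 1 + 2 * Hs - x.
Proof.
  assert (HC : 0 < 1 + 2 * Hs - x).
  { pose proof (hcount_partial_le 1) as H. simpl seq in H.
    rewrite sumR_cons, sumR_nil, hier_gf_1 in H by exact I. simpl pow in H. lra. }
  rewrite <- (exp_ln (1 + 2 * Hs - x)) by exact HC. apply exp_le.
  unfold Hs, excess. rewrite <- Series_plus by (auto; apply ex_series_excess_term; lra).
  apply Series_le_of_sumR_le.
  { apply (ex_series_plus (fun n => hcount n * x ^ n) (excess_term x)); [auto|].
    apply ex_series_excess_term; lra. }
  intros N. rewrite sumR_seq_0 by (unfold excess_term; simpl; ring). rewrite sumR_plus.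
  rewrite <- (ln_exp (_ + _)). apply ln_le; [apply exp_pos|].
  unfold excess_term. rewrite <- multiset_prod_exp by lra. apply multiset_prod_le_series.
Qed.

End ConvergentHierarchySeries.

Theorem hcount_series_diverges x :
  0 < x <= 31/100 -> 0 < gap x -> ~ ex_series (fun n => Rabs (hcount n * x ^ n)).
Proof.
  intros Hx Hg Hex.
  assert (Hex' : ex_series (fun n => hcount n * x ^ n)).
  { apply (ex_series_ext (fun n => Rabs (hcount n * x ^ n))); auto. intros n. apply Rabs_right.
    apply Rle_ge, Rmult_le_pos; [apply hier_gf_nonneg|apply pow_le; lra]. }
  pose proof (exp_series_le x Hx Hex').
  pose proof (exp_ge_tangent_ln_2 (Series (fun n => hcount n * x ^ n) + excess x)).
  unfold gap in Hg. lra.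
Qed.

(** * Convergence of the series of hierarchies avoiding T *)

Lemma exp_sub_id_le s t : 0 <= s <= t -> exp s - s <= exp t - t.
Proof.
  intros Hst. replace t with (s + (t - s)) by ring. rewrite exp_plus.
  pose proof (exp_ineq1_le s). pose proof (exp_ineq1_le (t - s)). nra.
Qed.

Definition avoids (T t : tree) : Prop := ~ contains t T.

Section AvoidingClass.

Variables (T : tree) (m : nat).
Hypothesis m_ge_2 : (2 <= m)%nat.
Hypothesis T_hierarchy : hierarchy T.
Hypothesis T_leaves : leaves T = m.

Lemma avoids_child l a : avoids T (Node l) -> In a l -> avoids T a.
Proof. intros H Ha Hc. apply H, contains_Node. right; eauto. Qed.

Lemma avoids_small a : (leaves a < m)%nat -> avoids T a.
Proof. intros Hl [u [Hu Hi]]. apply leaves_subtree_le in Hu. apply leaves_iso in Hi. lia. Qed.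

Lemma avoids_hier_of_size a : hierarchy a -> (leaves a < m)%nat -> hier_of_size (avoids T) (leaves a) a.
Proof. intros Ha Hl. repeat split; auto. apply avoids_small, Hl. Qed.

Lemma iso_of_children_vec N t l :
  In t (reps_in (avoids T) (seq 2 N)) -> covered (reps_in (avoids T) (seq 1 N)) l ->
  mult_vec (reps_in (avoids T) (seq 1 N)) (children t) = mult_vec (reps_in (avoids T) (seq 1 N)) l ->
  iso t (Node l).
Proof.
  intros Ht Hl Hv. pose proof (children_covered _ avoids_child N t Ht) as Hct.
  destruct t as [lt]. apply (iso_of_mult_vec _ _ _ Hct Hl Hv).
Qed.

(* A multiset of classes of size <= N, of weight m, that is not the multiset of children of any
   avoiding tree: it supplies the extra term x^m in [gf_le_multiset_prod]. *)
Definition missing_multiset (N : nat) (l : list tree) : Prop :=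
  covered (reps_in (avoids T) (seq 1 N)) l /\ (2 <= length l)%nat /\ list_sum (map leaves l) = m /\
  forall t, In t (reps_in (avoids T) (seq 2 N)) -> ~ iso t (Node l).

Lemma children_T_missing N : (m <= S N)%nat -> missing_multiset N (children T).
Proof.
  intros Hm. assert (ET : T = Node (children T)) by (destruct T; reflexivity).
  pose proof T_hierarchy as HT. pose proof T_leaves as HTm. rewrite ET in HT, HTm.
  split; [|split; [|split]].
  - intros a Ha. pose proof (hierarchy_child_lt a _ HT Ha) as Hlt. rewrite HTm in Hlt.
    apply (reps_in_cover _ _ a (leaves a)).
    + pose proof (leaves_pos a). apply in_seq; lia.
    + apply avoids_hier_of_size; [eapply hierarchy_child|]; eauto.
  - apply hierarchy_arity; auto. intros E. rewrite E in HTm. simpl in HTm; lia.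
  - rewrite <- HTm, leaves_Node. destruct (children T); [simpl in HTm; lia|reflexivity].
  - intros t Ht Hi. apply In_reps_in in Ht as [k [_ [_ [_ Hav]]]].
    apply Hav. exists t. split; [destruct t; left; auto|rewrite ET; exact Hi].
Qed.

Lemma m_leaves_missing N : (1 <= N)%nat -> (S N < m)%nat -> missing_multiset N (repeat (Node []) m).
Proof.
  intros HN Hm. split; [|split; [|split]].
  - intros a Ha. apply repeat_spec in Ha as ->. apply (reps_in_cover _ _ (Node []) 1).
    + apply in_seq; lia.
    + apply avoids_hier_of_size; [split; [discriminate|constructor]|simpl; lia].
  - rewrite repeat_length; lia.
  - apply leaves_repeat_leaf.
  - intros t Ht Hi. apply In_reps_in in Ht as [k [Hk [_ [Hlt _]]]]. apply in_seq in Hk.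
    apply leaves_iso in Hi. rewrite Hi, leaves_Node, leaves_repeat_leaf in Hlt.
    destruct m; [lia|]. simpl in Hlt. lia.
Qed.

Lemma missing_children_vec N :
  (1 <= N)%nat ->
  let L := reps_in (avoids T) (seq 1 N) in
  exists mu, length mu = length L /\ (2 <= list_sum mu)%nat /\ weight (map leaves L) mu = m /\
    forall t, In t (reps_in (avoids T) (seq 2 N)) -> mult_vec L (children t) <> mu.
Proof.
  intros HN L. pose proof (reps_in_noniso (avoids T) (seq 1 N) (seq_NoDup _ _)) as HL.
  assert (Hmiss : exists l, missing_multiset N l).
  { destruct (Nat.le_gt_cases m (S N)) as [Hm|Hm];
      eexists; [apply children_T_missing|apply m_leaves_missing]; eauto. }
  destruct Hmiss as (l & Hc & Hl & Hs & Hn).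
  exists (mult_vec L l). split; [apply length_map|].
  rewrite list_sum_mult_vec, weight_mult_vec by auto. repeat split; auto.
  intros t Ht Hv. exact (Hn t Ht (iso_of_children_vec N t l Ht Hc Hv)).
Qed.

Lemma avoids_excess_le x N :
  0 <= x <= 31/100 ->
  sumR (fun k => hier_gf (avoids T) k * ln_excess (x ^ k)) (seq 1 N) <= excess x.
Proof.
  intros Hx. eapply Rle_trans; [|apply (sumR_excess_term_le x N Hx)].
  rewrite (sumR_seq_0 (excess_term x)) by (unfold excess_term; simpl; ring).
  apply sumR_le. intros k Hk. apply in_seq in Hk. apply Rmult_le_compat_r.
  - apply ln_excess_nonneg, pow_lt_1; lra || lia.
  - apply hier_gf_mono. intros; exact I.
Qed.

Theorem avoids_partial_sum_le x :
  0 <= x <= 31/100 -> gap x <= x ^ m ->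
  forall N, sumR (fun k => hier_gf (avoids T) k * x ^ k) (seq 1 N) <= ln 2 - excess x.
Proof.
  intros Hx Hg. pose proof (excess_nonneg x Hx) as Hex.
  assert (Hxm : 0 <= x ^ m <= x) by (split; [apply pow_le|apply pow_le_self]; lra || lia).
  assert (Ha1 : hier_gf (avoids T) 1 = 1) by (apply hier_gf_1, avoids_small; simpl; lia).
  unfold gap in Hg. pose proof ln_2_gt.
  induction N as [|N IH]; [simpl; rewrite sumR_nil; lra|].
  change (seq 1 (S N)) with (1%nat :: seq 2 N). rewrite sumR_cons, Ha1.
  destruct (Nat.eq_dec N 0) as [->|HN]; [simpl; rewrite sumR_nil; lra|].
  set (y := sumR (fun k => hier_gf (avoids T) k * x ^ k) (seq 1 N)) in *.
  assert (Hy : 0 <= y)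
    by (apply sumR_nonneg; intros; apply Rmult_le_pos; [apply hier_gf_nonneg|apply pow_le; lra]).
  destruct (missing_children_vec N ltac:(lia)) as [mu [Hl [Hs [Hw Hn]]]].
  pose proof (gf_le_multiset_prod (avoids T) avoids_child N x [mu] ltac:(lra)) as HU.
  cbv zeta in HU. specialize (HU ltac:(repeat constructor; intros [])).
  specialize (HU ltac:(intros nu [<-|[]]; auto) ltac:(intros nu t [<-|[]] Ht; apply Hn; auto)).
  rewrite sumR_cons, sumR_nil, Hw, multiset_prod_exp in HU by lra. fold y in HU.
  pose proof (avoids_excess_le x N Hx).
  assert (exp (y + sumR (fun k => hier_gf (avoids T) k * ln_excess (x ^ k)) (seq 1 N))
          <= exp (y + excess x)) by (apply exp_le; lra).
  pose proof (exp_sub_id_le (y + excess x) (ln 2 - excess x + excess x) ltac:(lra)).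
  replace (ln 2 - excess x + excess x) with (ln 2) in * by ring. rewrite exp_ln in * by lra.
  simpl pow. lra.
Qed.

End AvoidingClass.

(** * Separating the radii of convergence *)

Lemma CV_radius_le_of_divergent (a : nat -> R) x :
  0 <= x -> ~ ex_series (fun n => Rabs (a n * x ^ n)) -> Rbar_le (CV_radius a) x.
Proof.
  intros Hx H. apply Rbar_not_lt_le. intros Hlt. apply H, CV_disk_inside. rewrite Rabs_right; auto; lra.
Qed.

Lemma CV_radius_ge_of_sumR_le (a : nat -> R) x M :
  0 <= x -> (forall n, 0 <= a n) ->
  (forall N, sumR (fun k => a k * x ^ k) (seq 0 (S N)) <= M) -> Rbar_le x (CV_radius a).
Proof.
  intros Hx Ha H. apply (proj1 (CV_radius_bounded a)). exists M. intros n.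
  assert (Hn : 0 <= a n * x ^ n) by (apply Rmult_le_pos; [apply Ha|apply pow_le; lra]).
  rewrite Rabs_right by lra. eapply Rle_trans; [|apply (H n)].
  apply (sumR_In_le (fun k => a k * x ^ k)); [|apply in_seq; lia].
  intros; apply Rmult_le_pos; [apply Ha|apply pow_le; lra].
Qed.

Lemma discrete_ivt (f : R -> R) d n :
  f 0 <= 0 -> 0 < f (INR n * d) -> exists i, (i < n)%nat /\ f (INR i * d) <= 0 /\ 0 < f (INR (S i) * d).
Proof.
  induction n; intros H0 Hn.
  - simpl in Hn. rewrite Rmult_0_l in Hn. lra.
  - destruct (Rle_or_lt (f (INR n * d)) 0) as [Hle|Hlt].
    + exists n; auto.
    + destruct (IHn H0 Hlt) as [i [Hi ?]]. exists i; split; auto.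
Qed.

Lemma fine_grid eps : 0 < eps -> exists n d, 0 < d <= eps /\ INR n * d = 3/10.
Proof.
  intros He. destruct (archimed_cor1 eps He) as [n [Hn Hn0]].
  assert (0 < INR n) by (apply lt_0_INR; lia).
  exists n, ((3/10) / INR n). split; [split|field; lra].
  - apply Rdiv_lt_0_compat; lra.
  - apply Rle_trans with (/ INR n); [|lra]. unfold Rdiv. rewrite <- (Rmult_1_l (/ INR n)) at 2.
    apply Rmult_le_compat_r; [apply Rlt_le, Rinv_0_lt_compat|]; lra.
Qed.

(* Where [gap] changes sign on a grid of mesh d, it is at most 2 d (1 + 4000/31) one step
   further, which is below x^m once d is small compared with the lower bound of [gap_pos_gt]. *)
Theorem gap_crossing (m : nat) :
  exists x0 x1, 0 < x0 /\ x0 < x1 <= 31/100 /\ 0 < gap x0 /\ gap x1 <= x1 ^ m.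
Proof.
  set (D := 1 + 4000/31). set (b := (2 * ln 2 - 1) / D).
  assert (Hb : 0 < b) by (unfold b, D; pose proof ln_2_gt; apply Rdiv_lt_0_compat; lra).
  assert (Hbm : 0 < b ^ m) by (apply pow_lt, Hb).
  destruct (fine_grid (Rmin (1/100) (b ^ m / (2 * D)))) as [n [d [[Hd0 Hd] Hnd]]].
  { apply Rmin_pos; [lra|]. apply Rdiv_lt_0_compat; unfold D; lra. }
  assert (Hd1 : d <= 1/100) by (eapply Rle_trans; [exact Hd|apply Rmin_l]).
  assert (Hd2 : 2 * D * d <= b ^ m).
  { assert (Hdb : d <= b ^ m / (2 * D)) by (eapply Rle_trans; [exact Hd|apply Rmin_r]).
    apply Rmult_le_reg_r with (/ (2 * D)); [apply Rinv_0_lt_compat; unfold D; lra|].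
    replace (2 * D * d * / (2 * D)) with d by (field; unfold D; lra). exact Hdb. }
  pose proof gap_3_10 as Hg. rewrite <- Hnd in Hg.
  destruct (discrete_ivt gap d n ltac:(pose proof gap_0; lra) Hg) as [i [Hi [Hgi Hgi1]]].
  assert (Hi1 : INR (S i) * d <= 3/10)
    by (rewrite <- Hnd; apply Rmult_le_compat_r; [lra|apply le_INR; lia]).
  assert (Hi0 : 0 <= INR i * d) by (apply Rmult_le_pos; [apply pos_INR|lra]).
  rewrite S_INR in *.
  exists ((INR i + 1) * d), ((INR i + 1) * d + d). repeat split; try lra.
  pose proof (gap_pos_gt ((INR i + 1) * d) ltac:(lra) Hgi1) as Hbx.
  pose proof (gap_sub_le (INR i * d) ((INR i + 1) * d + d) ltac:(lra) ltac:(lra)) as Hgap.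
  fold D in Hbx, Hgap. fold b in Hbx.
  assert (b ^ m <= ((INR i + 1) * d + d) ^ m) by (apply pow_incr; lra).
  lra.
Qed.

Theorem theorem3p3 (m : nat) (T : tree) :
  (2 <= m)%nat -> hierarchy T -> leaves T = m ->
  Rbar_lt (CV_radius (hier_gf (fun _ => True)))
          (CV_radius (hier_gf (fun t => ~ contains t T))).
Proof.
  intros Hm HT HTm. change (fun t => ~ contains t T) with (avoids T).
  destruct (gap_crossing m) as (x0 & x1 & Hx0 & Hx01 & Hg0 & Hg1).
  apply (Rbar_le_lt_trans _ x0).
  - apply CV_radius_le_of_divergent; [lra|]. apply hcount_series_diverges; lra.
  - apply (Rbar_lt_le_trans _ x1); [simpl; lra|].
    apply (CV_radius_ge_of_sumR_le _ x1 (ln 2 - excess x1)); [lra|apply hier_gf_nonneg|].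
    intros N. rewrite sumR_seq_0 by (simpl; ring).
    apply (avoids_partial_sum_le T m Hm HT HTm); lra.
Qed.
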